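(* Let $\mathcal X=\{1,\dots,k\}$ and let $G$ be a generator matrix on $\mathcal X$ with no zero entries; let $\mu$ be its unique stochastic vector with $\mu^tG=0$. Let $M\in\mathbb N$ be such that $I+G/n$ is non-negative for $n>M$, $K_n=I+\frac Gn\mathbb 1(n>M)$, let $\mathbf T$ be the inhomogeneous Markov chain with kernels $\{K_n\}$ (from time $n$ to $n+1$), and let $\nu=\langle\nu_1,\dots,\nu_k\rangle$ be the distributional limit of $\langle\frac1n\sum_{j=1}^n\delta_{T_j}(i)\rangle_{i\in\mathcal X}$. Let $\tilde K_j=(I-G/j)^{-1}$ for $j\ge1$ and let $\mathbf Z$ be the inhomogeneous Markov chain with initial distribution $\mu$ and kernels $\{\tilde K_n\}_{n\ge1}$. Then $\tilde K_n=K_n+O(n^{-2})$, and $$\nu\overset d=\lim_{n\to\infty}\frac1n\Big\langle\sum_{j=1}^n\delta_{Z_j}(i)\Big\rangle_{i\in\mathcal X}.$$ Moreover, for $\mathbf m=(m_1,\dots,m_k)\in\mathbb N_0^k$ with $N=\sum_im_i>0$, $$\mathbb E\Big[\prod_{i=1}^k\nu_i^{m_i}\Big]=\binom{N}{m_1,\dots,m_k}^{-1}\mathbb P\Big(\sum_{j=1}^N\mathbb 1(Z_j=i)=m_i,\ 1\le i\le k\Big),$$ and in particular $\mathbb E[\nu_i^N]=\mathbb P(Z_1=\dots=Z_N=i)$.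
   Context: A generator matrix: $G_{i,j}\ge0$ for $i\ne j$ and $G_{i,i}=-\sum_{j\ne i}G_{i,j}$. For each $j\ge1$, $(I-G/j)^{-1}$ exists and is a stochastic matrix. The limit law $\nu$ does not depend on the initial distribution of $\mathbf T$. *)

(* classical reals. States are 0..k-1 (paper's 1..k). *)
From Stdlib Require Import Reals List Arith.
Open Scope R_scope.

Definition vec := nat -> R.
Definition mat := nat -> nat -> R.

Fixpoint rsum (n : nat) (f : nat -> R) : R :=
  match n with O => 0 | S n' => rsum n' f + f n' end.
Fixpoint rprod (n : nat) (f : nat -> R) : R :=
  match n with O => 1 | S n' => rprod n' f * f n' end.

Definition is_generator (k : nat) (G : mat) : Prop :=
  (forall i j, (i < k)%nat -> (j < k)%nat -> i <> j -> 0 <= G i j) /\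
  (forall i, (i < k)%nat ->
     G i i = - rsum k (fun j => if Nat.eqb j i then 0 else G i j)).

Definition stochastic_vec (k : nat) (p : vec) : Prop :=
  (forall i, (i < k)%nat -> 0 <= p i) /\ rsum k p = 1.

Definition idm : mat := fun i j => if Nat.eqb i j then 1 else 0.
Definition mmul (k : nat) (A B : mat) : mat :=
  fun i j => rsum k (fun l => A i l * B l j).

Definition Kker (G : mat) (M : nat) : nat -> mat :=
  fun n i j => idm i j + (if Nat.ltb M n then G i j / INR n else 0).

Fixpoint paths (k n : nat) : list (list nat) :=
  match n with
  | O => nil :: nil
  | S n' => flat_map (fun x => map (cons x) (paths k n')) (seq 0 k)
  end.

(* product of transition probabilities, kernel K j used from time j to j+1 *)
Fixpoint trans (K : nat -> mat) (j x : nat) (r : list nat) : R :=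
  match r with
  | nil => 1
  | y :: r' => K j x y * trans K (S j) y r'
  end.

(* P(X_1 = x_1, ..., X_n = x_n) for chain with initial law p0 (of X_1)
   and kernels K_1, K_2, ... *)
Definition pathprob (p0 : vec) (K : nat -> mat) (p : list nat) : R :=
  match p with
  | nil => 1
  | x :: r => p0 x * trans K 1%nat x r
  end.

Definition lsum (l : list R) : R := fold_right Rplus 0 l.

Definition visits (p : list nat) (i : nat) : nat := count_occ Nat.eq_dec p i.

Definition occ (n : nat) (p : list nat) : vec :=
  fun i => INR (visits p i) / INR n.

Definition Eocc (k : nat) (p0 : vec) (K : nat -> mat) (f : vec -> R) (n : nat) : R :=
  lsum (map (fun p => pathprob p0 K p * f (occ n p)) (paths k n)).

Definition Pevent (k : nat) (p0 : vec) (K : nat -> mat) (N : nat)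
  (P : list nat -> bool) : R :=
  lsum (map (fun p => if P p then pathprob p0 K p else 0) (paths k N)).

Definition continuous_k (k : nat) (f : vec -> R) : Prop :=
  forall x eps, 0 < eps -> exists delta, 0 < delta /\
    forall y, (forall i, (i < k)%nat -> Rabs (y i - x i) < delta) ->
      Rabs (f y - f x) < eps.

Definition monomial (k : nat) (m : nat -> nat) : vec -> R :=
  fun x => rprod k (fun i => x i ^ m i).

(* By the minimum
   principle for the generator G, K~_n is stochastic and keeps mu invariant, and
   K~_n = I + G/n + G^2 K~_n / n^2, which gives K~_n = K_n + O(n^-2).

   For a path p let W_m(p) = prod_i (visits_i p)_(m_i) (falling factorials).
   Appending one step obeys a Pascal rule, so a_m(n, x) = E[W_m ; T_n = x] satisfies a
   linear recursion driven by K_n.  Since G has no zero entry, K_n is a Doeblin kernel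
   with constant of order 1/n, so the law of T_n tends to mu; by induction on
   N = sum m_i, a_m(n, .) / n^N then tends to the solution c_m of
   N c_m(z) - (c_m G)(z) = d_m(z) := m_z c_(m - e_z)(z), i.e. c_m = d_m K~_N / N, which
   is the recursion of the chain Z.  Hence sum_z c_m(z) = (m! / N!) P(Z has counts m), and as
   n^N E[prod occ_i^m_i] and sum_x a_m(n, x) differ by O(n^(N-1)), this is E[nu^m].

   Freeze the first a steps of a path at its position at time
   a: this moves the occupation vector by at most a/n.  At time a the marginal of T is
   close to mu, which is the marginal of Z at every time, and from time a on the path
   laws under K and K~ differ in total variation by at most sum_(s >= a) C / s^2. *)

From Stdlib Require Import Reals List Arith Lra Lia Classical ClassicalEpsilon
    FunctionalExtensionality.
From Coquelicot Require Import Compactness.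
Open Scope R_scope.

(** * Finite sums, paths and visit counts *)

Lemma rsum_ext n f g : (forall i, (i < n)%nat -> f i = g i) -> rsum n f = rsum n g.
Proof. induction n; simpl; intros H; auto. rewrite IHn by (intros; apply H; lia). rewrite H by lia.
  auto. Qed.

Lemma rprod_ext n f g : (forall i, (i < n)%nat -> f i = g i) -> rprod n f = rprod n g.
Proof. induction n; simpl; intros H; auto. rewrite IHn by (intros; apply H; lia). rewrite H by lia.
  auto. Qed.

Lemma rsum_plus n f g : rsum n (fun i => f i + g i) = rsum n f + rsum n g.
Proof. induction n; simpl; [lra|rewrite IHn; lra]. Qed.

Lemma rsum_minus n f g : rsum n (fun i => f i - g i) = rsum n f - rsum n g.
Proof. induction n; simpl; [lra|rewrite IHn; lra]. Qed.

Lemma rsum_scal n c f : rsum n (fun i => c * f i) = c * rsum n f.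
Proof. induction n; simpl; [lra|rewrite IHn; lra]. Qed.

Lemma rsum_scal_r n c f : rsum n (fun i => f i * c) = rsum n f * c.
Proof. induction n; simpl; [lra|rewrite IHn; lra]. Qed.

Lemma rsum_0 n : rsum n (fun _ => 0) = 0.
Proof. induction n; simpl; [lra|rewrite IHn; lra]. Qed.

Lemma rsum_const n c : rsum n (fun _ => c) = INR n * c.
Proof. induction n; simpl rsum; [simpl; lra|rewrite IHn, S_INR; lra]. Qed.

Lemma rsum_le n f g : (forall i, (i < n)%nat -> f i <= g i) -> rsum n f <= rsum n g.
Proof. induction n; simpl; intros H; [lra|]. assert (f n <= g n) by (apply H; lia).
  assert (rsum n f <= rsum n g) by (apply IHn; intros; apply H; lia). lra. Qed.

Lemma rsum_nonneg n f : (forall i, (i < n)%nat -> 0 <= f i) -> 0 <= rsum n f.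
Proof. intros H. rewrite <- (rsum_0 n). apply rsum_le; auto. Qed.

Lemma rsum_abs n f : Rabs (rsum n f) <= rsum n (fun i => Rabs (f i)).
Proof. induction n; simpl. rewrite Rabs_R0; lra.
  eapply Rle_trans; [apply Rabs_triang|lra]. Qed.

Lemma rsum_term_le n f j : (forall i, (i < n)%nat -> 0 <= f i) -> (j < n)%nat -> f j <= rsum n f.
Proof. induction n; intros H Hj; [lia|]. simpl. destruct (Nat.eq_dec j n).
  subst. pose proof (rsum_nonneg n f ltac:(intros; apply H; lia)). lra.
  pose proof (IHn ltac:(intros; apply H; lia) ltac:(lia)). pose proof (H n ltac:(lia)). lra. Qed.

Lemma rsum_swap n m f : rsum n (fun i => rsum m (fun j => f i j)) =
  rsum m (fun j => rsum n (fun i => f i j)).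
Proof. induction n; simpl. rewrite rsum_0; auto. rewrite IHn, <- rsum_plus. auto. Qed.

Lemma rsum_delta n y a : (y < n)%nat -> rsum n (fun x => if Nat.eqb x y then a x else 0) = a y.
Proof. induction n; intros H; [lia|]. simpl. destruct (Nat.eq_dec y n).
  - subst. rewrite Nat.eqb_refl. rewrite (rsum_ext _ _ (fun _ => 0)). rewrite rsum_0; lra.
    intros i Hi. destruct (Nat.eqb_spec i n); [lia|auto].
  - rewrite IHn by lia. destruct (Nat.eqb_spec n y); [lia|lra]. Qed.

Lemma rsum_delta_l n y a : (y < n)%nat -> rsum n (fun x => if Nat.eqb y x then a x else 0) = a y.
Proof. intros H. rewrite <- (rsum_delta n y a H). apply rsum_ext. intros i _.
  rewrite Nat.eqb_sym; auto. Qed.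

Lemma rsum_drop n y g : (y < n)%nat ->
  rsum n (fun j => if Nat.eqb j y then 0 else g j) = rsum n g - g y.
Proof. intros H. rewrite <- (rsum_delta n y g H). rewrite <- rsum_minus. apply rsum_ext. intros i _.
  destruct (Nat.eqb i y); lra. Qed.

Lemma rsum_shift b e j :
  rsum (S b) (fun t => e (j + t)%nat) = e j + rsum b (fun t => e (S j + t)%nat).
Proof. induction b. simpl. rewrite Nat.add_0_r. ring.
  change (rsum (S (S b)) (fun t => e (j + t)%nat)) with
      (rsum (S b) (fun t => e (j + t)%nat) + e (j + S b)%nat).
  rewrite IHb. simpl. replace (j + S b)%nat with (S (j + b)) by lia. ring. Qed.

Lemma finite_ub n f : exists B, forall i, (i < n)%nat -> f i <= B.
Proof. induction n. exists 0; intros; lia. destruct IHn as [B HB]. exists (Rmax B (f n)).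
  intros i Hi. destruct (Nat.eq_dec i n). subst; apply Rmax_r.
  eapply Rle_trans; [apply HB; lia|apply Rmax_l]. Qed.

Lemma finite_pos_lb n f : (forall i, (i < n)%nat -> 0 < f i) ->
  exists g, 0 < g /\ forall i, (i < n)%nat -> g <= f i.
Proof. induction n; intros H. exists 1; split; [lra| intros; lia].
  destruct IHn as [g [Hg H2]]. intros; apply H; lia. exists (Rmin g (f n)). split.
  apply Rmin_pos; auto. intros i Hi. destruct (Nat.eq_dec i n). subst; apply Rmin_r.
  eapply Rle_trans; [apply Rmin_l|apply H2; lia]. Qed.

Lemma finite_pos_lb2 n1 n2 (F : nat -> nat -> R) :
  (forall i j, (i < n1)%nat -> (j < n2)%nat -> 0 < F i j) ->
  exists g, 0 < g /\ forall i j, (i < n1)%nat -> (j < n2)%nat -> g <= F i j.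
Proof. induction n1; intros H. exists 1. split; [lra|intros; lia].
  destruct IHn1 as [g [Hg H1]]. intros; apply H; auto; lia.
  destruct (finite_pos_lb n2 (F n1)) as [g' [Hg' H2]]. intros; apply H; auto.
  exists (Rmin g g'). split. apply Rmin_pos; auto. intros i j Hi Hj. destruct (Nat.eq_dec i n1).
  subst. eapply Rle_trans. apply Rmin_r. auto. eapply Rle_trans. apply Rmin_l. apply H1; auto; lia.
  Qed.

Lemma rprod_mult k f g : rprod k (fun i => f i * g i) = rprod k f * rprod k g.
Proof. induction k; simpl; [ring|rewrite IHk; ring]. Qed.

Lemma rprod_inv k f : (forall i, (i < k)%nat -> f i <> 0) -> rprod k (fun i => / f i) = / rprod k f.
Proof. induction k; intros H; simpl. rewrite Rinv_1; auto. rewrite IHk by (intros; apply H; lia).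
  rewrite Rinv_mult. auto. Qed.

Lemma rprod_diff k x y : (forall i, (i < k)%nat -> 0 <= x i <= 1 /\ 0 <= y i <= 1) ->
  Rabs (rprod k x - rprod k y) <= rsum k (fun i => Rabs (x i - y i)) /\
  0 <= rprod k x <= 1 /\ 0 <= rprod k y <= 1.
Proof. induction k; intros H; simpl. rewrite Rminus_diag_eq, Rabs_R0 by auto. lra.
  destruct IHk as [I1 [I2 I3]]. intros; apply H; lia.
  destruct (H k ltac:(lia)) as [[X1 X2] [Y1 Y2]].
  split; [|split; split; nra].
  replace (rprod k x * x k - rprod k y * y k) with
      ((rprod k x - rprod k y) * x k + rprod k y * (x k - y k)) by ring.
  eapply Rle_trans. apply Rabs_triang. rewrite !Rabs_mult.
  rewrite (Rabs_pos_eq (x k)), (Rabs_pos_eq (rprod k y)) by lra.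
  pose proof (Rabs_pos (rprod k x - rprod k y)). pose proof (Rabs_pos (x k - y k)). nra. Qed.

Lemma rprod_change k y u v : (y < k)%nat -> rprod k (fun i => if Nat.eqb i y then u else v i) =
  u * rprod k (fun i => if Nat.eqb i y then 1 else v i).
Proof. induction k; intros H. lia. simpl. destruct (Nat.eq_dec y k).
  - subst. rewrite Nat.eqb_refl. rewrite (rprod_ext k (fun i => if Nat.eqb i k then u else v i) v).
    rewrite (rprod_ext k (fun i => if Nat.eqb i k then 1 else v i) v). ring.
    intros i Hi; destruct (Nat.eqb_spec i k); [lia|auto].
    intros i Hi; destruct (Nat.eqb_spec i k); [lia|auto].
  - rewrite IHk by lia. destruct (Nat.eqb_spec k y); [lia|]. ring. Qed.

Lemma rprod_ones k : rprod k (fun _ => 1) = 1.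
Proof. induction k; simpl; auto. rewrite IHk; ring. Qed.

Lemma Rabs_chain4 a b c d e :
  Rabs (a - e) <= Rabs (a - b) + Rabs (b - c) + Rabs (c - d) + Rabs (d - e).
Proof. replace (a - e) with ((a - b) + (b - c) + (c - d) + (d - e)) by ring.
  eapply Rle_trans; [apply Rabs_triang|]. apply Rplus_le_compat_r.
  eapply Rle_trans; [apply Rabs_triang|]. apply Rplus_le_compat_r. apply Rabs_triang. Qed.

Lemma Rabs_bnd a b : Rabs a <= b -> - b <= a <= b.
Proof. intros H. pose proof (Rle_abs a). pose proof (Rle_abs (- a)). rewrite Rabs_Ropp in H1. lra.
  Qed.

Lemma lsum_app l1 l2 : lsum (l1 ++ l2) = lsum l1 + lsum l2.
Proof. induction l1; simpl; [lra|rewrite IHl1; lra]. Qed.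

Lemma lsum_map_ext {A} (l : list A) f g : (forall x, In x l -> f x = g x) ->
  lsum (map f l) = lsum (map g l).
Proof. induction l; simpl; intros H; auto. rewrite H by auto. rewrite IHl; auto. Qed.

Lemma lsum_map_plus {A} (l : list A) f g :
  lsum (map (fun x => f x + g x) l) = lsum (map f l) + lsum (map g l).
Proof. induction l; simpl; [lra|rewrite IHl; lra]. Qed.

Lemma lsum_map_minus {A} (l : list A) f g : lsum (map (fun x => f x - g x) l) =
  lsum (map f l) - lsum (map g l).
Proof. induction l; simpl; [lra|rewrite IHl; lra]. Qed.

Lemma lsum_map_scal {A} (l : list A) c f : lsum (map (fun x => c * f x) l) = c * lsum (map f l).
Proof. induction l; simpl; [lra|rewrite IHl; lra]. Qed.

Lemma lsum_map_le {A} (l : list A) f g : (forall x, In x l -> f x <= g x) ->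
  lsum (map f l) <= lsum (map g l).
Proof. induction l; simpl; intros H; [lra|]. assert (f a <= g a) by auto.
  assert (lsum (map f l) <= lsum (map g l)) by auto. lra. Qed.

Lemma lsum_map_abs {A} (l : list A) f : Rabs (lsum (map f l)) <= lsum (map (fun x => Rabs (f x)) l).
Proof. induction l; simpl. rewrite Rabs_R0; lra. eapply Rle_trans; [apply Rabs_triang|lra]. Qed.

Lemma lsum_map_rsum {A} (l : list A) n f : lsum (map (fun x => rsum n (fun i => f x i)) l) =
  rsum n (fun i => lsum (map (fun x => f x i) l)).
Proof. induction l; simpl. rewrite rsum_0; auto. rewrite IHl, <- rsum_plus. auto. Qed.

Lemma lsum_seq k f : lsum (map f (seq 0 k)) = rsum k f.
Proof. induction k; auto. rewrite seq_S, map_app, lsum_app, IHk. simpl. lra. Qed.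

Lemma lsum_flat_map {A B} (l : list A) (g : A -> list B) f :
  lsum (map f (flat_map g l)) = lsum (map (fun a => lsum (map f (g a))) l).
Proof. induction l; simpl; auto. rewrite map_app, lsum_app, IHl. auto. Qed.

Lemma lsum_paths_S k n F : lsum (map F (paths k (S n))) =
  rsum k (fun x => lsum (map (fun r => F (x :: r)) (paths k n))).
Proof. simpl. rewrite lsum_flat_map, <- lsum_seq. apply lsum_map_ext. intros x _. rewrite map_map.
  auto. Qed.

Lemma lsum_paths_app k a b F : lsum (map F (paths k (a + b))) =
  lsum (map (fun p => lsum (map (fun r => F (p ++ r)) (paths k b))) (paths k a)).
Proof. revert F; induction a; intros F; simpl plus.
  simpl. rewrite Rplus_0_r. auto. rewrite !lsum_paths_S. apply rsum_ext. intros x _. rewrite IHa.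
  auto. Qed.

Lemma paths_in k n p : In p (paths k n) -> length p = n /\ forall x, In x p -> (x < k)%nat.
Proof. revert p; induction n; simpl; intros p H.
  destruct H as [H|[]]; subst; simpl; split; auto; intros x [].
  apply in_flat_map in H. destruct H as [x [Hx H]]. apply in_map_iff in H. destruct H as [r [E Hr]].
  subst. apply IHn in Hr. destruct Hr as [H1 H2]. apply in_seq in Hx. simpl; split; auto.
  intros y [E|Hy]; [lia|auto]. Qed.

Lemma lsum_paths_1 k F : lsum (map F (paths k 1)) = rsum k (fun x => F (x :: nil)).
Proof. rewrite lsum_paths_S. apply rsum_ext; intros. simpl. lra. Qed.

Lemma paths_nonnil k n p : (1 <= n)%nat -> In p (paths k n) -> p <> nil.
Proof. intros Hn Hp E. apply paths_in in Hp. destruct Hp as [Hl _]. subst p. simpl in Hl. lia. Qed.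

Lemma last_In_l {A} (l : list A) d : l <> nil -> In (last l d) l.
Proof. intros H. rewrite (app_removelast_last d H) at 2. apply in_or_app. right; simpl; auto. Qed.

Lemma last_paths k n p : (1 <= n)%nat -> In p (paths k n) -> (last p 0 < k)%nat.
Proof. intros Hn Hp. apply paths_in in Hp. destruct Hp as [Hl Hp]. apply Hp. apply last_In_l.
  intro E; rewrite E in Hl; simpl in Hl; lia. Qed.

Lemma visits_le p i : (visits p i <= length p)%nat.
Proof. unfold visits. induction p; simpl; auto. destruct (Nat.eq_dec a i); lia. Qed.

Lemma visits_snoc p y i : visits (p ++ y :: nil) i =
  (visits p i + if Nat.eqb y i then 1 else 0)%nat.
Proof. unfold visits. rewrite count_occ_app. f_equal. simpl.
  destruct (Nat.eq_dec y i); destruct (Nat.eqb_spec y i); auto; congruence. Qed.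

Lemma visits_app l1 l2 i : visits (l1 ++ l2) i = (visits l1 i + visits l2 i)%nat.
Proof. unfold visits. apply count_occ_app. Qed.

Lemma visits_removelast p i : p <> nil -> visits p i =
  (visits (removelast p) i + if Nat.eqb (last p 0%nat) i then 1 else 0)%nat.
Proof. intros H. rewrite (app_removelast_last 0%nat H) at 1. apply visits_snoc. Qed.

Lemma visits_all p i : (forall x, In x p -> x = i) -> visits p i = length p.
Proof. unfold visits. induction p; simpl; intros H; auto. destruct (Nat.eq_dec a i).
  rewrite IHp; auto.
  exfalso; apply n; apply H; auto. Qed.

Lemma occ_range n l i : (1 <= n)%nat -> length l = n -> 0 <= occ n l i <= 1.
Proof. intros Hn Hl. unfold occ. assert (0 < INR n) by (apply lt_0_INR; lia).
  assert (INR (visits l i) <= INR n) by (apply le_INR; rewrite <- Hl; apply visits_le).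
  pose proof (pos_INR (visits l i)). split. apply Rmult_le_pos; auto.
  left; apply Rinv_0_lt_compat; auto.
  apply Rmult_le_reg_r with (INR n); auto. unfold Rdiv. rewrite Rmult_assoc, Rinv_l by lra. lra.
  Qed.

Lemma occ_prefix_close n a p w r d : (1 <= n)%nat -> length p = a -> length w = a ->
  (INR a < INR n * d) ->
  forall i, Rabs (occ n (p ++ r) i - occ n (w ++ r) i) < d.
Proof. intros Hn Hp Hw Had i. unfold occ. rewrite !visits_app, !plus_INR.
  assert (0 < INR n) by (apply lt_0_INR; lia).
  replace ((INR (visits p i) + INR (visits r i)) / INR n
    - (INR (visits w i) + INR (visits r i)) / INR n)
    with ((INR (visits p i) - INR (visits w i)) / INR n) by (field; lra).
  unfold Rdiv. rewrite Rabs_mult, (Rabs_pos_eq (/ INR n)) by (left; apply Rinv_0_lt_compat; auto).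
  assert (INR (visits p i) <= INR a) by (apply le_INR; rewrite <- Hp; apply visits_le).
  assert (INR (visits w i) <= INR a) by (apply le_INR; rewrite <- Hw; apply visits_le).
  pose proof (pos_INR (visits p i)). pose proof (pos_INR (visits w i)).
  assert (Rabs (INR (visits p i) - INR (visits w i)) <= INR a) by (apply Rabs_le; lra).
  apply Rmult_lt_reg_r with (INR n); auto. rewrite Rmult_assoc, Rinv_l, Rmult_1_r by lra. lra. Qed.

(** * Path expectations of inhomogeneous chains *)

Definition expect (k : nat) (q : vec) (L : nat -> mat) (n : nat) (F : list nat -> R) : R :=
  lsum (map (fun p => pathprob q L p * F p) (paths k n)).

Definition stochastic_mat (k : nat) (A : mat) : Prop :=
  (forall i j, (i < k)%nat -> (j < k)%nat -> 0 <= A i j) /\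
  (forall i, (i < k)%nat -> rsum k (A i) = 1).

Definition stochastic_kernels k (L : nat -> mat) := forall n, (1 <= n)%nat ->
  stochastic_mat k (L n).

Lemma last_irrel {A} (l : list A) (a d d' : A) : last (a :: l) d = last (a :: l) d'.
Proof. revert a; induction l as [|b l IH]; intros a; simpl; auto. specialize (IH b). simpl in IH.
  destruct l; auto. Qed.

Lemma last_cons_d {A} (l : list A) (x d : A) : last (x :: l) d = last l x.
Proof. destruct l as [|b l]; simpl; auto. apply (last_irrel l b d x). Qed.

Lemma trans_app L j x r1 r2 : trans L j x (r1 ++ r2) =
  trans L j x r1 * trans L (j + length r1) (last r1 x) r2.
Proof. revert j x; induction r1 as [|y r1 IH]; intros j x; cbn [app trans length].
  rewrite Nat.add_0_r; simpl; lra. rewrite IH. rewrite (last_cons_d r1 y x).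
  replace (j + S (length r1))%nat with (S j + length r1)%nat by lia. lra. Qed.

Lemma pathprob_app q L p r : p <> nil -> pathprob q L (p ++ r) =
  pathprob q L p * trans L (length p) (last p 0%nat) r.
Proof. destruct p as [|x p']; intros H; [congruence|]. cbn [pathprob app length].
  rewrite trans_app, last_cons_d.
  replace (1 + length p')%nat with (S (length p')) by lia. lra. Qed.

Lemma expect_split k q L a b F : (1 <= a)%nat ->
  expect k q L (a + b) F =
    expect k q L a
        (fun p => lsum (map (fun r => trans L a (last p 0%nat) r * F (p ++ r)) (paths k b))).
Proof. intros Ha. unfold expect. rewrite lsum_paths_app. apply lsum_map_ext. intros p Hp.
  apply paths_in in Hp. destruct Hp as [Hl _].
  assert (p <> nil) by (intro E; rewrite E in Hl; simpl in Hl; lia).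
  rewrite <- lsum_map_scal. apply lsum_map_ext. intros r _. rewrite pathprob_app by auto.
  rewrite Hl. lra. Qed.

Lemma expect_snoc k q L n F : (1 <= n)%nat ->
  expect k q L (S n) F =
    expect k q L n (fun p => rsum k (fun y => L n (last p 0%nat) y * F (p ++ y :: nil))).
Proof. intros Hn. replace (S n) with (n + 1)%nat by lia. rewrite expect_split by auto.
  unfold expect. apply lsum_map_ext. intros p _. f_equal. rewrite lsum_paths_1. apply rsum_ext.
  intros; simpl; lra. Qed.

Lemma expect_front k q L n F : expect k q L (S n) F =
  rsum k (fun x => q x * lsum (map (fun r => trans L 1 x r * F (x :: r)) (paths k n))).
Proof. unfold expect. rewrite lsum_paths_S. apply rsum_ext. intros x _. rewrite <- lsum_map_scal.
  apply lsum_map_ext.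
  intros; simpl; lra. Qed.

Lemma expect_ext k q L n F G : (forall p, In p (paths k n) -> F p = G p) ->
  expect k q L n F = expect k q L n G.
Proof. intros H. unfold expect. apply lsum_map_ext. intros p Hp. rewrite H; auto. Qed.

Lemma expect_plus k q L n F G :
  expect k q L n (fun p => F p + G p) = expect k q L n F + expect k q L n G.
Proof. unfold expect. rewrite <- lsum_map_plus. apply lsum_map_ext. intros; lra. Qed.

Lemma expect_minus k q L n F G : expect k q L n (fun p => F p - G p) =
  expect k q L n F - expect k q L n G.
Proof. unfold expect. rewrite <- lsum_map_minus. apply lsum_map_ext. intros; lra. Qed.

Lemma expect_scal k q L n c F : expect k q L n (fun p => c * F p) = c * expect k q L n F.
Proof. unfold expect. rewrite <- lsum_map_scal. apply lsum_map_ext. intros; lra. Qed.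

Lemma expect_rsum k q L n m F : expect k q L n (fun p => rsum m (fun i => F p i)) =
  rsum m (fun i => expect k q L n (fun p => F p i)).
Proof. unfold expect. rewrite <- lsum_map_rsum. apply lsum_map_ext. intros. rewrite <- rsum_scal.
  auto. Qed.

Lemma trans_nonneg k L j x r : stochastic_kernels k L -> (1 <= j)%nat -> (x < k)%nat ->
  (forall y, In y r -> (y < k)%nat) -> 0 <= trans L j x r.
Proof. intros HL. revert j x; induction r as [|y r IH]; intros j x Hj Hx Hr; simpl. lra.
  apply Rmult_le_pos. apply (HL j Hj); auto. apply Hr; simpl; auto. apply IH; auto; try lia.
  apply Hr; simpl; auto. intros; apply Hr; simpl; auto. Qed.

Lemma trans_sum k L j x b : stochastic_kernels k L -> (1 <= j)%nat -> (x < k)%nat ->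
  lsum (map (fun r => trans L j x r) (paths k b)) = 1.
Proof. intros HL. revert j x; induction b; intros j x Hj Hx. simpl; lra.
  rewrite lsum_paths_S. simpl trans. rewrite (rsum_ext _ _ (fun y => L j x y * 1)).
  rewrite rsum_scal_r.
  rewrite (proj2 (HL j Hj) x Hx); lra. intros y Hy. rewrite lsum_map_scal. rewrite IHb; auto; lia.
  Qed.

Lemma pathprob_nonneg k q L p n : stochastic_kernels k L -> stochastic_vec k q ->
  In p (paths k n) -> 0 <= pathprob q L p.
Proof. intros HL Hq Hp. apply paths_in in Hp. destruct Hp as [_ Hp]. destruct p as [|x r]; simpl.
  lra.
  apply Rmult_le_pos. apply Hq. apply Hp; simpl; auto. apply trans_nonneg with k; auto.
  apply Hp; simpl; auto.
  intros; apply Hp; simpl; auto. Qed.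

Lemma expect_one k q L n : stochastic_kernels k L -> stochastic_vec k q ->
  expect k q L n (fun _ => 1) = 1.
Proof. intros HL Hq. destruct n. unfold expect; simpl; lra. rewrite expect_front.
  rewrite (rsum_ext _ _ q). apply Hq. intros x Hx.
  rewrite (lsum_map_ext _ _ (fun r => trans L 1 x r)).
  rewrite trans_sum; auto; lra. intros; lra. Qed.

Lemma expect_le k q L n F G : stochastic_kernels k L -> stochastic_vec k q ->
  (forall p, In p (paths k n) -> F p <= G p) -> expect k q L n F <= expect k q L n G.
Proof. intros HL Hq H. unfold expect. apply lsum_map_le. intros p Hp. apply Rmult_le_compat_l.
  eapply pathprob_nonneg; eauto. auto. Qed.

Lemma expect_abs k q L n F : stochastic_kernels k L -> stochastic_vec k q ->
  Rabs (expect k q L n F) <= expect k q L n (fun p => Rabs (F p)).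
Proof. intros HL Hq. unfold expect. eapply Rle_trans. apply lsum_map_abs. apply lsum_map_le.
  intros p Hp. rewrite Rabs_mult. rewrite (Rabs_pos_eq (pathprob q L p)). lra.
  eapply pathprob_nonneg; eauto. Qed.

Lemma expect_bound k q L n F B : stochastic_kernels k L -> stochastic_vec k q ->
  (forall p, In p (paths k n) -> Rabs (F p) <= B) -> Rabs (expect k q L n F) <= B.
Proof. intros HL Hq H. eapply Rle_trans. apply expect_abs; auto. eapply Rle_trans.
  apply expect_le with (G := fun _ => B); auto.
  replace (expect k q L n (fun _ => B)) with (B * expect k q L n (fun _ => 1)).
  rewrite expect_one; auto; lra.
  rewrite <- expect_scal. apply expect_ext; intros; lra. Qed.

Lemma expect_last_decomp k q L n H : (1 <= n)%nat ->
  expect k q L n (fun p => H (last p 0%nat) p) =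
    rsum k (fun x => expect k q L n (fun p => if Nat.eqb (last p 0%nat) x then H x p else 0)).
Proof. intros Hn. rewrite <- expect_rsum. apply expect_ext. intros p Hp.
  rewrite (rsum_delta_l k (last p 0%nat) (fun x => H x p)); auto. eapply last_paths; eauto. Qed.

Definition marginal k q L n x :=
  expect k q L n (fun p => if Nat.eqb (last p 0%nat) x then 1 else 0).

Lemma marginal_rec k q L n y : (1 <= n)%nat -> (y < k)%nat ->
  marginal k q L (S n) y = rsum k (fun x => marginal k q L n x * L n x y).
Proof. intros Hn Hy. unfold marginal. rewrite expect_snoc by auto.
  rewrite (expect_ext _ _ _ _ _ (fun p => L n (last p 0%nat) y)).
  2:{ intros p Hp. rewrite <- (rsum_delta k y (fun z => L n (last p 0%nat) z) Hy). apply rsum_ext.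
      intros z _.
      rewrite last_last. destruct (Nat.eqb z y); ring. }
  rewrite (expect_last_decomp k q L n (fun x _ => L n x y)) by auto. apply rsum_ext. intros x _.
  rewrite <- (Rmult_comm (L n x y)), <- expect_scal. apply expect_ext.
  intros; destruct (Nat.eqb _ _); ring. Qed.

Lemma marginal_sum k q L n : stochastic_kernels k L -> stochastic_vec k q -> (1 <= n)%nat ->
  rsum k (marginal k q L n) = 1.
Proof. intros HL Hq Hn. unfold marginal.
  transitivity (expect k q L n (fun _ => 1)); [|apply expect_one; auto].
  rewrite (expect_last_decomp k q L n (fun _ _ => 1)) by auto. apply rsum_ext; intros; reflexivity.
  Qed.

Lemma expect_lastfun k q L n h : (1 <= n)%nat ->
  expect k q L n (fun p => h (last p 0%nat)) = rsum k (fun x => marginal k q L n x * h x).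
Proof. intros Hn. rewrite (expect_last_decomp k q L n (fun x _ => h x)) by auto. apply rsum_ext.
  intros x _.
  unfold marginal. rewrite Rmult_comm, <- expect_scal. apply expect_ext.
  intros; destruct (Nat.eqb _ _); ring. Qed.

Lemma lsum_trans_bound k L j x b (F : list nat -> R) B :
  stochastic_kernels k L -> (1 <= j)%nat -> (x < k)%nat ->
  (forall r, In r (paths k b) -> Rabs (F r) <= B) ->
  Rabs (lsum (map (fun r => trans L j x r * F r) (paths k b))) <= B.
Proof. intros HL Hj Hx H. eapply Rle_trans. apply lsum_map_abs.
  apply Rle_trans with (lsum (map (fun r => B * trans L j x r) (paths k b))).
  apply lsum_map_le. intros r Hr. rewrite Rabs_mult, Rabs_pos_eq. rewrite Rmult_comm.
  apply Rmult_le_compat_r; auto.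
  apply trans_nonneg with k; auto. apply paths_in in Hr. apply Hr. apply paths_in in Hr.
  apply trans_nonneg with k; auto. apply Hr.
  rewrite lsum_map_scal, trans_sum; auto. lra. Qed.

Lemma trans_total_variation k L L' (e : nat -> R) j x b :
  stochastic_kernels k L -> stochastic_kernels k L' -> (1 <= j)%nat -> (x < k)%nat ->
  (forall s, (j <= s)%nat -> forall x, (x < k)%nat ->
     rsum k (fun y => Rabs (L s x y - L' s x y)) <= e s) ->
  lsum (map (fun r => Rabs (trans L j x r - trans L' j x r)) (paths k b)) <=
    rsum b (fun t => e (j + t)%nat).
Proof. intros HL HL'. revert j x; induction b; intros j x Hj Hx He.
  - simpl. rewrite Rminus_diag_eq, Rabs_R0 by auto. lra.
  - rewrite rsum_shift. rewrite lsum_paths_S. simpl trans.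
    apply Rle_trans with (rsum k (fun y =>
      Rabs (L j x y - L' j x y) * 1 + L' j x y * rsum b (fun t => e (S j + t)%nat))).
    + apply rsum_le. intros y Hy.
      rewrite (lsum_map_ext _ _ (fun r => Rabs ((L j x y - L' j x y) * trans L (S j) y r
        + L' j x y * (trans L (S j) y r - trans L' (S j) y r)))) by (intros; f_equal; ring).
      eapply Rle_trans. apply lsum_map_le. intros r Hr. apply Rabs_triang. rewrite lsum_map_plus.
      apply Rplus_le_compat.
      * rewrite (lsum_map_ext _ _ (fun r => Rabs (L j x y - L' j x y) * trans L (S j) y r)).
        rewrite lsum_map_scal, trans_sum; auto; lra. intros r Hr.
        rewrite Rabs_mult, (Rabs_pos_eq (trans _ _ _ _)); auto.
        apply trans_nonneg with k; auto. apply paths_in in Hr; apply Hr.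
      * rewrite
          (lsum_map_ext _ _ (fun r => L' j x y * Rabs (trans L (S j) y r - trans L' (S j) y r))).
        rewrite lsum_map_scal. apply Rmult_le_compat_l. apply (HL' j Hj); auto. apply IHb; auto.
        intros s Hs; apply He; lia.
        intros r Hr. rewrite Rabs_mult, Rabs_pos_eq; auto. apply (HL' j Hj); auto.
    + rewrite rsum_plus, rsum_scal_r, rsum_scal_r, (proj2 (HL' j Hj) x Hx).
      specialize (He j (le_n _) x Hx).
      lra. Qed.

(** * Generators and resolvents *)

Lemma idm_row k i : (i < k)%nat -> rsum k (fun j => idm i j) = 1.
Proof. intros H. unfold idm. apply (rsum_delta_l k i (fun _ => 1) H). Qed.

Lemma idm_mul_l k i f : (i < k)%nat -> rsum k (fun l => idm i l * f l) = f i.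
Proof. intros H. unfold idm. rewrite <- (rsum_delta_l k i f H). apply rsum_ext. intros l _.
  destruct (Nat.eqb i l); lra. Qed.

Lemma idm_mul_r k j f : (j < k)%nat -> rsum k (fun l => f l * idm l j) = f j.
Proof. intros H. unfold idm. rewrite <- (rsum_delta k j f H). apply rsum_ext. intros l _.
  destruct (Nat.eqb l j); lra. Qed.

Lemma idm_nonneg i j : 0 <= idm i j.
Proof. unfold idm. destruct (Nat.eqb i j); lra. Qed.

Lemma gen_rowsum k G i : is_generator k G -> (i < k)%nat -> rsum k (G i) = 0.
Proof. intros [H1 H2] Hi. pose proof (H2 i Hi). rewrite rsum_drop in H by auto. lra. Qed.

Lemma gen_offdiag k G i j : is_generator k G -> (i < k)%nat -> (j < k)%nat -> i <> j -> 0 <= G i j.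
Proof. intros [H1 _]; auto. Qed.

Lemma finite_argmin k (f : nat -> R) : (1 <= k)%nat -> exists i0, (i0 < k)%nat /\
  forall i, (i < k)%nat -> f i0 <= f i.
Proof. induction k; intros H. lia. destruct k. exists 0%nat. split; auto. intros i Hi.
  assert (i = 0%nat) by lia. subst; lra.
  destruct IHk as [i0 [H1 H2]]. lia. destruct (Rle_dec (f i0) (f (S k))).
  exists i0. split. lia. intros i Hi. destruct (Nat.eq_dec i (S k)). subst; auto. apply H2; lia.
  exists (S k). split. lia. intros i Hi. destruct (Nat.eq_dec i (S k)). subst; lra.
  pose proof (H2 i ltac:(lia)); lra. Qed.

Definition id_minus_gen (G : mat) (n : nat) : mat := fun a b => idm a b - G a b / INR n.

Definition is_resolvent (k : nat) (G : mat) (n : nat) (A : mat) : Prop :=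
  forall i j, (i < k)%nat -> (j < k)%nat ->
    mmul k (id_minus_gen G n) A i j = idm i j /\ mmul k A (id_minus_gen G n) i j = idm i j.

Lemma id_minus_gen_mul k G n f i : (i < k)%nat ->
  rsum k (fun l => id_minus_gen G n i l * f l) = f i - / INR n * rsum k (fun l => G i l * f l).
Proof. intros Hi. unfold id_minus_gen.
  rewrite (rsum_ext _ _ (fun l => idm i l * f l - / INR n * (G i l * f l))).
  rewrite rsum_minus, idm_mul_l, rsum_scal by auto. auto. intros; unfold Rdiv; ring. Qed.

Lemma resolvent_fixpoint k G n A i j : is_resolvent k G n A -> (i < k)%nat -> (j < k)%nat ->
  A i j = idm i j + / INR n * rsum k (fun l => G i l * A l j).
Proof. intros HA Hi Hj. pose proof (proj1 (HA i j Hi Hj)) as E. unfold mmul in E.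
  rewrite id_minus_gen_mul in E by auto. lra. Qed.

(* Minimum principle: in a row i0 where column j of A is minimal, (G A) i0 j >= 0. *)
Lemma resolvent_nonneg k G n A i j : is_generator k G -> (1 <= n)%nat -> is_resolvent k G n A ->
  (i < k)%nat -> (j < k)%nat -> 0 <= A i j.
Proof. intros HG Hn HA Hi Hc.
  destruct (finite_argmin k (fun l => A l j)) as [i0 [Hi0 Hmin]]; [lia|].
  assert (Hs : rsum k (fun l => G i0 l * A l j) = rsum k (fun l => G i0 l * (A l j - A i0 j))).
  { rewrite
      (rsum_ext _ (fun l => G i0 l * (A l j - A i0 j)) (fun l => G i0 l * A l j - A i0 j * G i0 l))
      by (intros; ring).
    rewrite rsum_minus, rsum_scal. change (rsum k (fun l => G i0 l)) with (rsum k (G i0)).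
    rewrite gen_rowsum by auto. ring. }
  assert (Hp : 0 <= rsum k (fun l => G i0 l * (A l j - A i0 j))).
  { apply rsum_nonneg. intros l Hl. destruct (Nat.eq_dec l i0). subst; lra.
    apply Rmult_le_pos. apply (gen_offdiag k G); auto. pose proof (Hmin l Hl); lra. }
  assert (0 <= / INR n) by (left; apply Rinv_0_lt_compat, lt_0_INR; lia).
  pose proof (Rmult_le_pos _ _ H Hp). rewrite <- Hs in H0.
  rewrite (resolvent_fixpoint k G n A i0 j HA Hi0 Hc) in Hmin.
  pose proof (idm_nonneg i0 j). pose proof (Hmin i Hi). lra. Qed.

Lemma resolvent_rowsum k G n A i : is_generator k G -> is_resolvent k G n A -> (i < k)%nat ->
  rsum k (A i) = 1.
Proof. intros HG HA Hi. transitivity (rsum k (fun j => mmul k A (id_minus_gen G n) i j)).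
  2:{ rewrite (rsum_ext _ _ (fun j => idm i j)). apply idm_row; auto. intros; apply HA; auto. }
  symmetry. unfold mmul. rewrite rsum_swap.
  apply rsum_ext. intros l Hl. unfold id_minus_gen.
  rewrite (rsum_ext _ _ (fun j => A i l * idm l j - A i l * / INR n * G l j)) by
      (intros; unfold Rdiv; ring).
  rewrite rsum_minus, rsum_scal, rsum_scal, idm_row by auto.
  change (rsum k (fun j => G l j)) with (rsum k (G l)).
  rewrite gen_rowsum; auto. ring. Qed.

Lemma resolvent_stochastic k G n A : is_generator k G -> (1 <= n)%nat -> is_resolvent k G n A ->
  stochastic_mat k A.
Proof. intros HG Hn HA. split; intros.
  - apply (resolvent_nonneg k G n); auto.
  - apply (resolvent_rowsum k G n); auto. Qed.

Lemma resolvent_stationary k G n A mu j : is_generator k G ->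
  (forall j, (j < k)%nat -> rsum k (fun i => mu i * G i j) = 0) -> is_resolvent k G n A ->
  (j < k)%nat -> rsum k (fun i => mu i * A i j) = mu j.
Proof. intros HG HmuG HA Hj. rewrite <- (idm_mul_r k j mu Hj).
  rewrite (rsum_ext k (fun l => mu l * idm l j) (fun l => mu l * mmul k (id_minus_gen G n) A l j)).
  2:{ intros l Hl; rewrite (proj1 (HA l j Hl Hj)); auto. } unfold mmul.
  rewrite (rsum_ext k (fun l => mu l * rsum k (fun m => id_minus_gen G n l m * A m j))
    (fun l => rsum k (fun m => mu l * id_minus_gen G n l m * A m j))).
  2:{ intros; rewrite <- rsum_scal; apply rsum_ext; intros; ring. }
  rewrite rsum_swap. apply rsum_ext. intros m Hm. rewrite rsum_scal_r. f_equal.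
  unfold id_minus_gen. rewrite (rsum_ext _ _ (fun l => mu l * idm l m - / INR n * (mu l * G l m)))
    by (intros; unfold Rdiv; ring).
  rewrite rsum_minus, rsum_scal, HmuG, (idm_mul_r k m mu) by auto. ring. Qed.

Lemma resolvent_expand k G n A i j : (1 <= n)%nat -> is_resolvent k G n A -> (i < k)%nat ->
  (j < k)%nat ->
  A i j - idm i j - G i j / INR n =
    / (INR n ^ 2) * rsum k (fun l => G i l * rsum k (fun m => G l m * A m j)).
Proof. intros Hn HA Hi Hj. assert (0 < INR n) by (apply lt_0_INR; lia).
  rewrite (resolvent_fixpoint k G n A i j) at 1 by auto.
  rewrite (rsum_ext k (fun l => G i l * A l j)
    (fun l => G i l * idm l j + / INR n * (G i l * rsum k (fun m => G l m * A m j)))).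
  - rewrite rsum_plus, rsum_scal, (idm_mul_r k j (G i)) by auto. field. lra.
  - intros l Hl. rewrite (resolvent_fixpoint k G n A l j) by auto. ring. Qed.

Lemma stochastic_entry_le1 k A i j : stochastic_mat k A -> (i < k)%nat -> (j < k)%nat -> A i j <= 1.
Proof. intros [H1 H2] Hi Hj. rewrite <- (H2 i Hi). apply rsum_term_le; auto. Qed.

Lemma entry_abs_bound k (G : mat) : exists B, 0 <= B /\ forall i j, (i < k)%nat -> (j < k)%nat ->
  Rabs (G i j) <= B.
Proof. destruct (finite_ub k (fun i => rsum k (fun j => Rabs (G i j)))) as [B HB].
  exists (Rmax 0 B). split. apply Rmax_l.
  intros i j Hi Hj. eapply Rle_trans; [|apply Rmax_r]. eapply Rle_trans; [|apply (HB i Hi)].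
  apply (rsum_term_le k (fun j => Rabs (G i j))). intros; apply Rabs_pos. auto. Qed.

Lemma gen_stochastic_bound k G A B i j : stochastic_mat k A ->
  (forall i j, (i < k)%nat -> (j < k)%nat -> Rabs (G i j) <= B) -> (i < k)%nat -> (j < k)%nat ->
  Rabs (rsum k (fun l => G i l * rsum k (fun m => G l m * A m j))) <= INR k * B * (INR k * B).
Proof. intros HA HB Hi Hj. eapply Rle_trans. apply rsum_abs.
  replace (INR k * B * (INR k * B)) with (rsum k (fun _ => B * (INR k * B))) by
      (rewrite rsum_const; ring).
  apply rsum_le. intros l Hl. rewrite Rabs_mult. apply Rmult_le_compat; try apply Rabs_pos. auto.
  eapply Rle_trans. apply rsum_abs.
  replace (INR k * B) with (rsum k (fun _ => B)) by (rewrite rsum_const; ring).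
  apply rsum_le. intros m Hm. rewrite Rabs_mult, <- (Rmult_1_r B).
  apply Rmult_le_compat; try apply Rabs_pos; auto.
  rewrite Rabs_pos_eq by (apply HA; auto). apply (stochastic_entry_le1 k); auto. Qed.

Lemma resolvent_kernel_close k G M Kt : is_generator k G ->
  (forall n, (1 <= n)%nat -> is_resolvent k G n (Kt n)) ->
  exists C, 0 <= C /\ forall n, (1 <= n)%nat -> forall i j, (i < k)%nat -> (j < k)%nat ->
      Rabs (Kt n i j - Kker G M n i j) <= C / (INR n ^ 2).
Proof. intros HG HK. destruct (entry_abs_bound k G) as [B [HB0 HB]].
  set (C0 := INR k * B * (INR k * B)).
  assert (HC0 : 0 <= C0) by
      (unfold C0; pose proof (pos_INR k); apply Rmult_le_pos; apply Rmult_le_pos; auto).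
  assert (HBM : 0 <= B * INR M) by (apply Rmult_le_pos; auto; apply pos_INR).
  exists (B * INR M + C0). split; [lra|]. intros n Hn i j Hi Hj.
  assert (Hpos : 0 < INR n) by (apply lt_0_INR; lia).
  assert (Hinv2 : 0 < / INR n ^ 2) by (apply Rinv_0_lt_compat, pow_lt; auto).
  assert (Hq := gen_stochastic_bound k G (Kt n) B i j
      (resolvent_stochastic k G n (Kt n) HG Hn (HK n Hn)) HB Hi Hj).
  fold C0 in Hq.
  pose proof (resolvent_expand k G n (Kt n) i j Hn (HK n Hn) Hi Hj) as E.
  assert (Hrem : Rabs (Kt n i j - idm i j - G i j / INR n) <= C0 / INR n ^ 2).
  { rewrite E, Rabs_mult, Rabs_pos_eq by lra. unfold Rdiv. rewrite Rmult_comm.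
    apply Rmult_le_compat_r; lra. }
  unfold Kker. destruct (Nat.ltb_spec M n).
  - replace (Kt n i j - (idm i j + G i j / INR n)) with (Kt n i j - idm i j - G i j / INR n) by
      ring.
    apply Rle_trans with (C0 / INR n ^ 2); auto. unfold Rdiv. apply Rmult_le_compat_r; lra.
  - replace (Kt n i j - (idm i j + 0)) with (G i j / INR n + (Kt n i j - idm i j - G i j / INR n))
      by ring.
    eapply Rle_trans. apply Rabs_triang.
    assert (Rabs (G i j / INR n) <= B * INR M / INR n ^ 2).
    { assert (INR n <= INR M) by (apply le_INR; lia).
      replace (G i j / INR n) with (G i j * INR n / INR n ^ 2) by (field; lra).
      unfold Rdiv. rewrite !Rabs_mult, (Rabs_pos_eq (INR n)), (Rabs_pos_eq (/ _)) by lra.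
      apply Rmult_le_compat_r; [lra|]. apply Rmult_le_compat; try apply Rabs_pos; auto; lra. }
    unfold Rdiv in *. lra. Qed.

(** * Convergence of sequences *)

Lemma cv_0_squeeze (x y : nat -> R) n0 : (forall n, (n0 <= n)%nat -> Rabs (x n) <= y n) ->
  Un_cv y 0 -> Un_cv x 0.
Proof. intros H Hy eps He. destruct (Hy eps He) as [N HN]. exists (max N n0). intros n Hn.
  specialize (HN n ltac:(lia)). specialize (H n ltac:(lia)). unfold Rdist in *.
  rewrite Rminus_0_r in *.
  pose proof (Rle_abs (y n)). lra. Qed.

Lemma cv_inv_n : Un_cv (fun n => / INR n) 0.
Proof. intros eps He. destruct (INR_archimed eps 1 He) as [N HN]. exists (S N). intros n Hn.
  unfold Rdist. rewrite Rminus_0_r. assert (0 < INR n) by (apply lt_0_INR; lia).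
  rewrite Rabs_pos_eq by (left; apply Rinv_0_lt_compat; auto).
  assert (INR N <= INR n) by (apply le_INR; lia).
  apply Rmult_lt_reg_r with (INR n); auto. rewrite Rinv_l by lra. nra. Qed.

Lemma cv_scal c x l : Un_cv x l -> Un_cv (fun n => c * x n) (c * l).
Proof. intros H. apply CV_mult; auto.
  intros eps He; exists 0%nat; intros; unfold Rdist; rewrite Rminus_diag_eq, Rabs_R0; auto. Qed.

Lemma cv_const c : Un_cv (fun _ => c) c.
Proof. intros eps He; exists 0%nat; intros; unfold Rdist; rewrite Rminus_diag_eq, Rabs_R0; auto.
  Qed.

Lemma cv_rsum k (f : nat -> nat -> R) (l : nat -> R) :
    (forall i, (i < k)%nat -> Un_cv (fun n => f n i) (l i)) ->
  Un_cv (fun n => rsum k (f n)) (rsum k l).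
Proof. induction k; intros H. simpl. apply cv_const. simpl. apply CV_plus.
  apply IHk; intros; apply H; lia. apply H; lia. Qed.

Lemma cv_minus x y l1 l2 : Un_cv x l1 -> Un_cv y l2 -> Un_cv (fun n => x n - y n) (l1 - l2).
Proof. intros H1 H2. apply CV_minus; auto. Qed.

Lemma cv_abs0 x : Un_cv x 0 -> Un_cv (fun n => Rabs (x n)) 0.
Proof. intros H. rewrite <- Rabs_R0. apply cv_cvabs; auto. Qed.

Lemma cv_0_iff x l : Un_cv (fun n => x n - l) 0 -> Un_cv x l.
Proof. intros H eps He. destruct (H eps He) as [N HN]. exists N. intros n Hn. specialize (HN n Hn).
  unfold Rdist in *. rewrite Rminus_0_r in HN. auto. Qed.


Lemma mul_le_of_lt_div x B e : 0 <= B -> 0 < e -> 0 <= x -> x < e / (B + 1) -> x * B <= e.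
Proof. intros HB He Hx H. apply Rle_trans with (e / (B + 1) * B); [apply Rmult_le_compat_r; lra|].
  apply Rmult_le_reg_r with (B + 1); [lra|].
  replace (e / (B + 1) * B * (B + 1)) with (e * B) by (field; lra). nra. Qed.

Lemma div_lt_of_archimed K e A n : 0 < e -> INR A * e > K -> (A <= n)%nat -> (1 <= n)%nat ->
  K / INR n < e.
Proof. intros He HA Hn H1. assert (INR A <= INR n) by (apply le_INR; auto).
  assert (0 < INR n) by (apply lt_0_INR; lia).
  apply Rmult_lt_reg_r with (INR n); auto.
  replace (K / INR n * INR n) with K by (field; lra). nra. Qed.

Lemma exp_le_inv x y : exp x <= exp y -> x <= y.
Proof. intros H. destruct (Rle_dec x y); auto.
  assert (exp y < exp x) by (apply exp_increasing; lra). lra. Qed.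

Definition harmonic (n0 n : nat) : R := rsum n (fun j => if Nat.leb n0 j then / INR j else 0).

Lemma harmonic_S n0 n : (n0 <= n)%nat -> harmonic n0 (S n) = harmonic n0 n + / INR n.
Proof. intros H. unfold harmonic. simpl. destruct (Nat.leb_spec n0 n); [lra|lia]. Qed.

Lemma harmonic_self n0 : harmonic n0 n0 = 0.
Proof. unfold harmonic. rewrite (rsum_ext _ _ (fun _ => 0)). apply rsum_0.
  intros i Hi. destruct (Nat.leb_spec n0 i); [lia|auto]. Qed.

Lemma harmonic_exp n0 n : (1 <= n0)%nat -> (n0 <= n)%nat -> INR n / INR n0 <= exp (harmonic n0 n).
Proof. intros H1 H2. induction H2.
  - rewrite harmonic_self, exp_0. right; field. apply not_0_INR; lia.
  - rewrite harmonic_S by lia. rewrite exp_plus. assert (0 < INR m) by (apply lt_0_INR; lia).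
    assert (0 < INR n0) by (apply lt_0_INR; lia).
    pose proof (exp_ineq1_le (/ INR m)). rewrite S_INR.
    apply Rle_trans with (INR m / INR n0 * (1 + / INR m)).
    right; field; lra. apply Rmult_le_compat; auto. left; apply Rdiv_lt_0_compat; auto.
    left; apply Rinv_0_lt_compat in H; lra. Qed.

(* Uses 1 - t <= exp (- t). *)
Lemma contraction_harmonic_bound (x : nat -> R) (alpha : R) (n3 : nat) : (1 <= n3)%nat ->
  (forall n, (n3 <= n)%nat -> 0 <= x n /\ x (S n) <= (1 - alpha / INR n) * x n) ->
  forall n, (n3 <= n)%nat -> x n * exp (alpha * harmonic n3 n) <= x n3.
Proof. intros Hn3 H n Hn. induction Hn.
  - rewrite harmonic_self, Rmult_0_r, exp_0. lra.
  - rewrite harmonic_S by lia. assert (0 < INR m) by (apply lt_0_INR; lia).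
    destruct (H m Hn) as [Hx Hs]. set (t := alpha / INR m).
    assert (E : exp (alpha * (harmonic n3 m + / INR m)) = exp (alpha * harmonic n3 m) * exp t).
    { rewrite <- exp_plus. f_equal. unfold t, Rdiv; ring. }
    rewrite E. pose proof (exp_pos (alpha * harmonic n3 m)). pose proof (exp_pos t).
    assert (Ht : (1 - t) * exp t <= 1).
    { pose proof (exp_ineq1_le (- t)).
      assert (Hk : exp (- t) * exp t = 1) by (rewrite <- exp_plus, Rplus_opp_l; apply exp_0).
      rewrite <- Hk. apply Rmult_le_compat_r; lra. }
    apply Rle_trans with ((1 - t) * exp t * (x m * exp (alpha * harmonic n3 m))).
    + replace ((1 - t) * exp t * (x m * exp (alpha * harmonic n3 m)))
        with ((1 - t) * x m * (exp (alpha * harmonic n3 m) * exp t)) by ring.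
      apply Rmult_le_compat_r; [apply Rmult_le_pos; lra | exact Hs].
    + assert (0 <= x m * exp (alpha * harmonic n3 m)) by (apply Rmult_le_pos; lra). nra. Qed.

Lemma cv_0_of_contraction (x : nat -> R) (alpha : R) (n3 : nat) : 0 < alpha -> (1 <= n3)%nat ->
  (forall n, (n3 <= n)%nat -> 0 <= x n /\ x (S n) <= (1 - alpha / INR n) * x n) -> Un_cv x 0.
Proof. intros Ha Hn3 H eps Heps. destruct (H n3 (le_n _)) as [Hx0 _].
  set (T := x n3 / eps / alpha).
  assert (HT : 0 <= T) by
      (unfold T, Rdiv; repeat apply Rmult_le_pos; try lra; left; apply Rinv_0_lt_compat; lra).
  assert (E : alpha * T = x n3 / eps) by (unfold T; field; lra). clearbody T.
  destruct (INR_archimed 1 (INR n3 * exp T) ltac:(lra)) as [N HN].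
  exists (max N n3). intros n Hn. unfold Rdist. rewrite Rminus_0_r.
  assert (Hnn : (n3 <= n)%nat) by lia. destruct (H n Hnn) as [Hxn _]. rewrite Rabs_pos_eq by auto.
  assert (0 < INR n3) by (apply lt_0_INR; lia).
  assert (HnN : INR N <= INR n) by (apply le_INR; lia).
  assert (Hs : T <= harmonic n3 n).
  { apply exp_le_inv. apply Rle_trans with (INR n / INR n3); [|apply harmonic_exp; auto].
    apply Rmult_le_reg_r with (INR n3); auto. unfold Rdiv.
    rewrite Rmult_assoc, Rinv_l, Rmult_1_r by lra. lra. }
  pose proof (contraction_harmonic_bound x alpha n3 Hn3 H n Hnn).
  pose proof (exp_ineq1_le (alpha * harmonic n3 n)).
  assert (alpha * T <= alpha * harmonic n3 n) by (apply Rmult_le_compat_l; lra).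
  assert (x n * (1 + x n3 / eps) <= x n3).
  { apply Rle_trans with (x n * exp (alpha * harmonic n3 n)); auto.
    apply Rmult_le_compat_l; auto. lra. }
  destruct (Rle_lt_dec eps (x n)); auto.
  assert (0 <= x n3 / eps) by (apply Rmult_le_pos; [lra|left; apply Rinv_0_lt_compat; lra]).
  assert (Hfin : eps * (1 + x n3 / eps) <= x n * (1 + x n3 / eps)) by
      (apply Rmult_le_compat_r; lra).
  replace (eps * (1 + x n3 / eps)) with (eps + x n3) in Hfin by (field; lra). lra. Qed.

Lemma cv_0_of_averaged_recursion (x d : nat -> R) n1 : (1 <= n1)%nat ->
  (forall n, (n1 <= n)%nat -> 0 <= x n /\ x (S n) <= INR n / INR (S n) * x n + d n / INR n) ->
  Un_cv d 0 -> Un_cv x 0.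
Proof. intros Hn1 H Hd eps He.
  destruct (Hd (eps / 3) ltac:(lra)) as [N2 HN2].
  set (n2 := max N2 n1).
  assert (Inv : forall n, (n2 <= n)%nat ->
    INR n * x n <= INR n2 * x n2 + 2 * (eps / 3) * (INR n - INR n2)).
  { intros n Hn. induction Hn. lra.
    destruct (H m ltac:(unfold n2 in Hn; lia)) as [Hx Hs].
    specialize (HN2 m ltac:(unfold n2 in Hn; lia)).
    unfold Rdist in HN2. rewrite Rminus_0_r in HN2. apply Rlt_le in HN2. apply Rabs_bnd in HN2.
    assert (0 < INR m) by (apply lt_0_INR; unfold n2 in Hn; lia).
    assert (HS : INR (S m) = INR m + 1) by apply S_INR.
    assert (INR (S m) * x (S m) <= INR m * x m + INR (S m) / INR m * d m).
    { apply Rle_trans with (INR (S m) * (INR m / INR (S m) * x m + d m / INR m)).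
      - apply Rmult_le_compat_l; [apply pos_INR|auto].
      - right. field. lra. }
    assert (INR (S m) / INR m * d m <= 2 * (eps / 3)).
    { destruct (Rle_dec 0 (d m)).
      - apply Rle_trans with (2 * d m). apply Rmult_le_compat_r; auto. rewrite HS.
        apply Rmult_le_reg_r with (INR m); auto. unfold Rdiv. rewrite Rmult_assoc, Rinv_l by lra.
        assert (1 <= INR m) by (apply (le_INR 1); unfold n2 in Hn; lia). lra. lra.
      - apply Rle_trans with 0. rewrite <- (Rmult_0_r (INR (S m) / INR m)).
        apply Rmult_le_compat_l. apply Rmult_le_pos. apply pos_INR.
        left; apply Rinv_0_lt_compat; auto. lra. lra. }
    rewrite HS in *. lra. }
  assert (Hx2 : 0 <= x n2) by (apply (H n2); unfold n2; lia).
  destruct (INR_archimed (eps / 3) (INR n2 * x n2) ltac:(lra)) as [N3 HN3].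
  exists (max (max N3 n2) 1). intros n Hn. unfold Rdist. rewrite Rminus_0_r.
  destruct (H n ltac:(unfold n2 in Hn; lia)) as [Hxn _]. rewrite Rabs_pos_eq by auto.
  specialize (Inv n ltac:(lia)). assert (0 < INR n) by (apply lt_0_INR; lia).
  assert (INR N3 <= INR n) by (apply le_INR; lia). assert (INR n2 <= INR n) by (apply le_INR; lia).
  pose proof (pos_INR n2).
  apply Rmult_lt_reg_l with (INR n); auto.
  assert (INR n2 * x n2 < INR n * (eps / 3)) by nra.
  assert (2 * (eps / 3) * (INR n - INR n2) <= 2 * (eps / 3) * INR n) by nra. nra. Qed.

Lemma pow_1_plus_remainder (t : R) (N : nat) : 0 <= t ->
  0 <= (1 + t) ^ N - 1 - INR N * t <= INR N ^ 2 * t ^ 2 * (1 + t) ^ N.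
Proof. intros Ht. induction N.
  - simpl. lra.
  - destruct IHN as [I1 I2]. rewrite S_INR.
    assert (E : (1 + t) ^ S N - 1 - (INR N + 1) * t =
      (1 + t) * ((1 + t) ^ N - 1 - INR N * t) + INR N * t ^ 2).
    { simpl. ring. }
    rewrite E. pose proof (pos_INR N). assert (1 <= (1 + t) ^ N) by (apply pow_R1_Rle; lra).
    split. apply Rplus_le_le_0_compat. apply Rmult_le_pos; lra. apply Rmult_le_pos; auto.
    apply pow_le; lra.
    assert ((1 + t) * ((1 + t) ^ N - 1 - INR N * t) <= (1 + t) * (INR N ^ 2 * t ^ 2 * (1 + t) ^ N))
        by (apply Rmult_le_compat_l; lra).
    assert (INR N * t ^ 2 <= INR N * t ^ 2 * (1 + t) ^ S N).
    { rewrite <- (Rmult_1_r (INR N * t ^ 2)) at 1. apply Rmult_le_compat_l.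
      - apply Rmult_le_pos; auto. apply pow_le; auto.
      - apply pow_R1_Rle; lra. }
    assert (0 <= t ^ 2 * (1 + t) ^ S N) by (apply Rmult_le_pos; apply pow_le; lra).
    replace ((1 + t) * (INR N ^ 2 * t ^ 2 * (1 + t) ^ N)) with (INR N ^ 2 * (t ^ 2 * (1 + t) ^ S N))
        in H2 by (simpl; ring).
    replace (INR N * t ^ 2 * (1 + t) ^ S N) with (INR N * (t ^ 2 * (1 + t) ^ S N)) in H3 by ring.
    replace ((INR N + 1) ^ 2 * t ^ 2 * (1 + t) ^ S N) with
        ((INR N ^ 2 + 2 * INR N + 1) * (t ^ 2 * (1 + t) ^ S N)) by ring.
    nra. Qed.

Lemma pow_S_ratio n p : (1 <= n)%nat -> (1 + / INR n) ^ p / INR (S n) ^ p = / INR n ^ p.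
Proof. intros Hn. assert (0 < INR n) by (apply lt_0_INR; lia). rewrite S_INR.
  replace (1 + / INR n) with ((INR n + 1) * / INR n) by (field; lra).
  rewrite Rpow_mult_distr, pow_inv.
  field. split; apply pow_nonzero; lra. Qed.

Lemma inv_square_tail a b : (2 <= a)%nat ->
  rsum b (fun t => / INR (a + t) ^ 2) <= / INR (a - 1) - / INR (a - 1 + b).
Proof. intros Ha. induction b. simpl. rewrite Nat.add_0_r. lra.
  change (rsum (S b) (fun t => / INR (a + t) ^ 2)) with
      (rsum b (fun t => / INR (a + t) ^ 2) + / INR (a + b) ^ 2).
  assert (Hp : 0 < INR (a - 1 + b)) by (apply lt_0_INR; lia).
  assert (E : INR (a + b) = INR (a - 1 + b) + 1) by (rewrite <- S_INR; f_equal; lia).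
  assert (E2 : INR (a - 1 + S b) = INR (a - 1 + b) + 1) by (rewrite <- S_INR; f_equal; lia).
  rewrite E, E2. set (u := INR (a - 1 + b)) in *.
  assert (/ (u + 1) ^ 2 <= / u - / (u + 1)).
  { replace (/ u - / (u + 1)) with (/ (u * (u + 1))) by (field; lra). apply Rinv_le_contravar.
    apply Rmult_lt_0_compat; lra. simpl. nra. }
  lra. Qed.

Lemma doeblin_contraction k (A : mat) beta (u : vec) :
  (forall x y, (x < k)%nat -> (y < k)%nat -> beta <= A x y) ->
  (forall x, (x < k)%nat -> rsum k (A x) = 1) -> rsum k u = 0 ->
  rsum k (fun y => Rabs (rsum k (fun x => u x * A x y))) <=
    (1 - INR k * beta) * rsum k (fun x => Rabs (u x)).
Proof. intros HAb HArow Hu0.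
  apply Rle_trans with (rsum k (fun y => rsum k (fun x => Rabs (u x) * (A x y - beta)))).
  - apply rsum_le. intros y Hy.
    replace (rsum k (fun x => u x * A x y)) with (rsum k (fun x => u x * (A x y - beta))).
    + eapply Rle_trans. apply rsum_abs. apply rsum_le. intros x Hx.
      rewrite Rabs_mult, (Rabs_pos_eq (A x y - beta)); [lra|]. pose proof (HAb x y Hx Hy); lra.
    + rewrite (rsum_ext _ _ (fun x => u x * A x y - beta * u x)) by (intros; ring).
      rewrite rsum_minus, rsum_scal, Hu0. ring.
  - rewrite rsum_swap, Rmult_comm, <- rsum_scal_r. apply Req_le, rsum_ext. intros x Hx.
    rewrite rsum_scal, rsum_minus, HArow, rsum_const by auto. ring. Qed.

(** * Falling-factorial moments and path counts *)

Definition falling (s m : nat) : R := rprod m (fun l => INR s - INR l).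

Lemma falling_S s m : falling (S s) (S m) = INR (S s) * falling s m.
Proof. unfold falling. induction m. cbn [rprod]. change (INR 0) with 0. ring.
  change (rprod (S (S m)) (fun l => INR (S s) - INR l)) with
      (rprod (S m) (fun l => INR (S s) - INR l) * (INR (S s) - INR (S m))).
  rewrite IHm. cbn [rprod]. rewrite !S_INR. ring. Qed.

Lemma falling_pascal s m : falling (S s) m = falling s m + INR m * falling s (m - 1).
Proof. destruct m. unfold falling; cbn [rprod INR]; ring. rewrite falling_S.
  replace (S m - 1)%nat with m by lia.
  unfold falling. cbn [rprod]. rewrite !S_INR. ring. Qed.

Lemma falling_zero s m : (s < m)%nat -> falling s m = 0.
Proof. unfold falling. induction m; intros H. lia. cbn [rprod]. destruct (Nat.eq_dec s m).
  subst; ring.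
  rewrite IHm by lia. ring. Qed.

Lemma falling_bounds s m : 0 <= falling s m <= INR s ^ m.
Proof. induction m. unfold falling; cbn [rprod pow]; lra.
  destruct (le_lt_dec m s).
  - unfold falling in *. cbn [rprod pow]. destruct IHm as [I1 I2].
    assert (INR m <= INR s) by (apply le_INR; auto). pose proof (pos_INR m). pose proof (pos_INR s).
    split. apply Rmult_le_pos; lra. rewrite Rmult_comm. apply Rmult_le_compat; lra.
  - rewrite falling_zero by lia. split. lra. apply pow_le, pos_INR. Qed.

Lemma falling_diff s m n : (s <= n)%nat -> (1 <= n)%nat ->
  INR s ^ m - falling s m <= INR m ^ 2 * INR n ^ m / INR n.
Proof. intros Hs Hn. assert (Hp : 0 < INR n) by (apply lt_0_INR; lia).
  assert (Hsn : INR s <= INR n) by (apply le_INR; auto).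
  pose proof (pos_INR s). induction m.
  - unfold falling; cbn [rprod pow INR]. unfold Rdiv. rewrite !Rmult_0_l. lra.
  - assert (E : INR s ^ S m - falling s (S m) =
      INR s * (INR s ^ m - falling s m) + INR m * falling s m).
    { unfold falling. cbn [rprod pow]. ring. }
    rewrite E. destruct (falling_bounds s m) as [F1 F2].
    assert (INR s ^ m <= INR n ^ m) by (apply pow_incr; lra).
    assert (0 <= INR s ^ m - falling s m). lra.
    assert (INR s * (INR s ^ m - falling s m) <= INR n * (INR m ^ 2 * INR n ^ m / INR n)).
    { apply Rmult_le_compat; auto. }
    assert (INR m * falling s m <= INR m * INR n ^ m).
    { apply Rmult_le_compat_l. apply pos_INR. lra. }
    replace (INR n * (INR m ^ 2 * INR n ^ m / INR n)) with (INR m ^ 2 * INR n ^ m) in H2 by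
        (field; lra).
    rewrite S_INR.
    replace ((INR m + 1) ^ 2 * INR n ^ S m / INR n) with ((INR m + 1) ^ 2 * INR n ^ m) by
        (simpl; field; lra).
    pose proof (pos_INR m). pose proof (pow_le (INR n) m ltac:(lra)).
    assert ((INR m ^ 2 + INR m) * INR n ^ m <= (INR m + 1) ^ 2 * INR n ^ m) by
        (apply Rmult_le_compat_r; [auto|nra]).
    lra. Qed.

Definition falling_weight k (m : nat -> nat) (p : list nat) : R :=
  rprod k (fun i => falling (visits p i) (m i)).

Definition decr (m : nat -> nat) (y : nat) : nat -> nat :=
  fun i => if Nat.eqb i y then (m i - 1)%nat else m i.

Lemma falling_weight_snoc k m p y : (y < k)%nat -> falling_weight k m (p ++ y :: nil) =
  falling_weight k m p + INR (m y) * falling_weight k (decr m y) p.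
Proof. intros Hy. unfold falling_weight, decr.
  pose (R0 := fun i => falling (visits p i) (m i)).
  rewrite (rprod_ext k (fun i => falling (visits (p ++ y :: nil) i) (m i))
      (fun i => if Nat.eqb i y then falling (S (visits p y)) (m y) else R0 i)).
  rewrite (rprod_ext k (fun i => falling (visits p i) (m i))
      (fun i => if Nat.eqb i y then falling (visits p y) (m y) else R0 i)).
  rewrite (rprod_ext k (fun i => falling (visits p i) (if Nat.eqb i y then (m i - 1)%nat else m i))
      (fun i => if Nat.eqb i y then falling (visits p y) (m y - 1) else R0 i)).
  rewrite (rprod_change k y (falling (S (visits p y)) (m y))) by auto.
  rewrite (rprod_change k y (falling (visits p y) (m y))) by auto.
  rewrite (rprod_change k y (falling (visits p y) (m y - 1))) by auto. rewrite falling_pascal. ring.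
  all: intros i Hi; unfold R0; destruct (Nat.eqb_spec i y); subst; auto.
  rewrite visits_snoc, Nat.eqb_refl. f_equal; lia.
  rewrite visits_snoc. destruct (Nat.eqb_spec y i); [congruence|]. f_equal; lia. Qed.

Fixpoint nsum (k : nat) (m : nat -> nat) : nat :=
  match k with O => O | S k' => (nsum k' m + m k')%nat end.

Lemma fold_plus_init a l : fold_right plus a l = (fold_right plus 0 l + a)%nat.
Proof. induction l; simpl; lia. Qed.

Lemma nsum_fold k m : fold_right plus 0%nat (map m (seq 0 k)) = nsum k m.
Proof. induction k; auto. rewrite seq_S, map_app, fold_right_app. simpl.
  rewrite fold_plus_init, IHk. lia. Qed.

Lemma nsum_ext k m m' : (forall i, (i < k)%nat -> m i = m' i) -> nsum k m = nsum k m'.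
Proof. induction k; simpl; intros H; auto. rewrite IHk, H by (auto; lia). auto. Qed.

Lemma nsum_pos k m y : (y < k)%nat -> (m y <= nsum k m)%nat.
Proof. induction k; simpl; intros Hy. lia. destruct (Nat.eq_dec y k). subst; lia.
  pose proof (IHk ltac:(lia)); lia. Qed.

Lemma nsum_dec k m y : (y < k)%nat -> (1 <= m y)%nat -> nsum k (decr m y) = (nsum k m - 1)%nat.
Proof. induction k; intros H1 H2. lia. simpl. unfold decr at 2. destruct (Nat.eqb_spec k y).
  - subst y. rewrite (nsum_ext k (decr m k) m). lia.
    intros i Hi; unfold decr; destruct (Nat.eqb_spec i k); [lia|auto].
  - rewrite IHk by (auto; lia). pose proof (nsum_pos k m y ltac:(lia)). lia. Qed.

Lemma nsum_zero k m : nsum k m = 0%nat -> forall i, (i < k)%nat -> m i = 0%nat.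
Proof. induction k; simpl; intros H i Hi. lia. destruct (Nat.eq_dec i k). subst; lia.
  apply IHk; lia. Qed.

Lemma nsum_single k i N : (i < k)%nat -> nsum k (fun j => if Nat.eqb j i then N else 0%nat) = N.
Proof. induction k; intros H. lia. simpl. destruct (Nat.eqb_spec k i).
  - subst. rewrite (nsum_ext _ _ (fun _ => 0%nat)). clear. induction i; simpl; lia. intros j Hj.
    destruct (Nat.eqb_spec j i); lia.
  - rewrite IHk by lia. lia. Qed.

Lemma rprod_pow_nsum k m a : rprod k (fun i => a ^ m i) = a ^ nsum k m.
Proof. induction k; simpl; auto. rewrite IHk, pow_add. auto. Qed.

Lemma falling_weight_zero k m p : (forall i, (i < k)%nat -> m i = 0%nat) ->
  falling_weight k m p = 1.
Proof. intros H. unfold falling_weight. induction k; simpl; auto.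
  rewrite IHk by (intros; apply H; lia). rewrite H by lia. unfold falling; simpl; ring. Qed.

Definition wmarginal k q L m n x :=
  expect k q L n (fun p => if Nat.eqb (last p 0%nat) x then falling_weight k m p else 0).

Lemma wmarginal_rec k q L m n y : (1 <= n)%nat -> (y < k)%nat ->
  wmarginal k q L m (S n) y =
    rsum k (fun x =>
      (wmarginal k q L m n x + INR (m y) * wmarginal k q L (decr m y) n x) * L n x y).
Proof. intros Hn Hy. unfold wmarginal. rewrite expect_snoc by auto.
  rewrite (expect_ext _ _ _ _ _ (fun p =>
    L n (last p 0%nat) y * (falling_weight k m p + INR (m y) * falling_weight k (decr m y) p))).
  2:{ intros p Hp. rewrite <- falling_weight_snoc by auto.
      rewrite <- (rsum_delta k y (fun z =>
        L n (last p 0%nat) z * falling_weight k m (p ++ z :: nil)) Hy).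
      apply rsum_ext. intros z _. rewrite last_last. destruct (Nat.eqb_spec z y); subst; ring. }
  rewrite (expect_last_decomp k q L n (fun x p =>
    L n x y * (falling_weight k m p + INR (m y) * falling_weight k (decr m y) p))) by auto.
  apply rsum_ext. intros x _.
  rewrite <- expect_scal, <- expect_plus. rewrite Rmult_comm, <- expect_scal. apply expect_ext.
  intros; destruct (Nat.eqb _ _); ring. Qed.

Lemma wmarginal_zero k q L m n x : (1 <= n)%nat -> (forall i, (i < k)%nat -> m i = 0%nat) ->
  wmarginal k q L m n x = marginal k q L n x.
Proof. intros Hn H. unfold wmarginal, marginal. apply expect_ext. intros p _.
  rewrite falling_weight_zero; auto. Qed.

Lemma wmarginal_scaled_rec k G M q m N n y : (M < n)%nat -> (1 <= n)%nat -> (y < k)%nat ->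
  wmarginal k q (Kker G M) m (S n) y / INR (S n) ^ S N * (1 + / INR n) ^ S N =
  rsum k (fun x => wmarginal k q (Kker G M) m n x / INR n ^ S N * (idm x y + G x y / INR n))
  + INR (m y) * rsum k
      (fun x => wmarginal k q (Kker G M) (decr m y) n x / INR n ^ N * (idm x y + G x y / INR n))
    / INR n.
Proof. intros HMn Hn1 Hy. assert (Hp : 0 < INR n) by (apply lt_0_INR; lia).
  rewrite wmarginal_rec by auto.
  set (A := fun x y => idm x y + G x y / INR n). set (w := wmarginal k q (Kker G M)).
  replace (rsum k (fun x => (w m n x + INR (m y) * w (decr m y) n x) * Kker G M n x y)
      / INR (S n) ^ S N * (1 + / INR n) ^ S N)
    with (rsum k (fun x => (w m n x + INR (m y) * w (decr m y) n x) * Kker G M n x y) *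
        ((1 + / INR n) ^ S N / INR (S n) ^ S N))
    by (unfold Rdiv; ring).
  rewrite pow_S_ratio by auto.
  rewrite (rsum_ext _ _ (fun x => w m n x * A x y + INR (m y) * w (decr m y) n x * A x y)).
  2:{ intros x Hx. unfold Kker, A. destruct (Nat.ltb_spec M n); [ring|lia]. }
  rewrite rsum_plus, <- (rsum_scal k (INR (m y))), Rmult_plus_distr_r. f_equal.
  - rewrite <- rsum_scal_r. apply rsum_ext; intros. unfold A, Rdiv. ring.
  - rewrite <- rsum_scal_r. unfold Rdiv. rewrite <- rsum_scal_r. apply rsum_ext. intros.
    unfold A. simpl pow. field. split; [|apply pow_nonzero]; lra. Qed.

Lemma occ_pow_falling_close s m n : (s <= n)%nat -> (1 <= n)%nat ->
  (0 <= (INR s / INR n) ^ m <= 1 /\ 0 <= / INR n ^ m * falling s m <= 1) /\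
  Rabs ((INR s / INR n) ^ m - / INR n ^ m * falling s m) <= INR m ^ 2 / INR n.
Proof. intros Hs Hn. assert (Hp : 0 < INR n) by (apply lt_0_INR; lia).
  assert (HS : INR s <= INR n) by (apply le_INR; auto). pose proof (pos_INR s).
  destruct (falling_bounds s m) as [F1 F2]. pose proof (falling_diff s m n Hs Hn) as Hd.
  assert (Hsn : INR s ^ m <= INR n ^ m) by (apply pow_incr; lra).
  assert (Hpn : 0 < INR n ^ m) by (apply pow_lt; auto).
  assert (Hr : 0 <= INR s / INR n <= 1).
  { split. apply Rmult_le_pos; auto. left; apply Rinv_0_lt_compat; auto.
    apply Rmult_le_reg_r with (INR n); auto. unfold Rdiv. rewrite Rmult_assoc, Rinv_l by lra. lra. }
  assert (E : (INR s / INR n) ^ m - / INR n ^ m * falling s m =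
    (INR s ^ m - falling s m) / INR n ^ m).
  { unfold Rdiv. rewrite Rpow_mult_distr, pow_inv. ring. }
  split; [split|].
  - split; [apply pow_le; lra|]. rewrite <- (pow1 m). apply pow_incr. lra.
  - split; [apply Rmult_le_pos; auto; left; apply Rinv_0_lt_compat; auto|].
    apply Rmult_le_reg_r with (INR n ^ m); auto. rewrite Rmult_comm, <- Rmult_assoc, Rinv_r by lra.
    lra.
  - rewrite E, Rabs_pos_eq by (apply Rmult_le_pos; [lra|left; apply Rinv_0_lt_compat; auto]).
    apply Rmult_le_reg_r with (INR n ^ m); auto.
    replace ((INR s ^ m - falling s m) / INR n ^ m * INR n ^ m) with (INR s ^ m - falling s m) by
        (field; lra).
    replace (INR m ^ 2 / INR n * INR n ^ m) with (INR m ^ 2 * INR n ^ m / INR n) by (field; lra).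
    lra. Qed.

Lemma Eocc_monomial_approx k q L m n :
  stochastic_kernels k L -> stochastic_vec k q -> (1 <= n)%nat ->
  Rabs (Eocc k q L (monomial k m) n - rsum k (fun x => wmarginal k q L m n x) / INR n ^ nsum k m)
    <= rsum k (fun i => INR (m i) ^ 2) / INR n.
Proof. intros HL Hq Hn. assert (Hp : 0 < INR n) by (apply lt_0_INR; lia).
  assert (E : rsum k (fun x => wmarginal k q L m n x) = expect k q L n (falling_weight k m)).
  { unfold wmarginal.
    rewrite <- (expect_last_decomp k q L n (fun _ p => falling_weight k m p)) by auto. auto. }
  rewrite E. unfold Rdiv at 1. rewrite Rmult_comm, <- expect_scal. unfold Eocc.
  fold (expect k q L n (fun p => monomial k m (occ n p))).
  rewrite <- expect_minus. apply expect_bound; auto. intros p Hp'.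
  destruct (paths_in k n p Hp') as [Hl _].
  unfold monomial, occ, falling_weight. rewrite <- (rprod_pow_nsum k m (INR n)).
  rewrite <- rprod_inv by (intros; apply pow_nonzero; lra). rewrite <- rprod_mult.
  unfold Rdiv. rewrite <- rsum_scal_r.
  assert (Hc : forall i, (i < k)%nat ->
    (0 <= (INR (visits p i) / INR n) ^ m i <= 1 /\
     0 <= / INR n ^ m i * falling (visits p i) (m i) <= 1) /\
    Rabs ((INR (visits p i) / INR n) ^ m i - / INR n ^ m i * falling (visits p i) (m i))
      <= INR (m i) ^ 2 / INR n).
  { intros i Hi. apply occ_pow_falling_close; auto. rewrite <- Hl. apply visits_le. }
  eapply Rle_trans. apply rprod_diff. intros i Hi; apply Hc; auto.
  apply rsum_le. intros i Hi. apply Hc; auto. Qed.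

Fixpoint limit_coef (k : nat) (mu : vec) (Kt : nat -> mat) (N : nat) (m : nat -> nat) : vec :=
  match N with
  | O => mu
  | S N' => fun z => / INR (S N') *
      rsum k (fun y => INR (m y) * limit_coef k mu Kt N' (decr m y) y * Kt (S N') y z)
  end.

Definition count_indicator k m (p : list nat) : R :=
  if forallb (fun i => Nat.eqb (visits p i) (m i)) (seq 0 k) then 1 else 0.

Lemma count_indicator_true k m p : (forall i, (i < k)%nat -> visits p i = m i) ->
  count_indicator k m p = 1.
Proof. intros H. unfold count_indicator. replace (forallb _ _) with true; auto. symmetry.
  apply forallb_forall.
  intros i Hi. apply in_seq in Hi. apply Nat.eqb_eq. apply H. lia. Qed.

Lemma count_indicator_false k m p : ~ (forall i, (i < k)%nat -> visits p i = m i) ->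
  count_indicator k m p = 0.
Proof. intros H. unfold count_indicator. destruct (forallb _ _) eqn:E; auto. exfalso. apply H.
  intros i Hi.
  rewrite forallb_forall in E. apply Nat.eqb_eq. apply E. apply in_seq. lia. Qed.

Lemma count_indicator_removelast k m p : p <> nil -> (last p 0 < k)%nat ->
  count_indicator k m p =
    if Nat.leb 1 (m (last p 0%nat))
    then count_indicator k (decr m (last p 0%nat)) (removelast p) else 0.
Proof. intros Hp Hl. set (l := last p 0%nat) in *.
  destruct (classic (forall i, (i < k)%nat -> visits p i = m i)) as [H|H].
  - rewrite count_indicator_true by auto. assert (Hml : (1 <= m l)%nat).
    { rewrite <- (H l Hl). rewrite visits_removelast by auto. fold l. rewrite Nat.eqb_refl. lia. }
    destruct (Nat.leb_spec 1 (m l)); [|lia]. symmetry. apply count_indicator_true. intros i Hi.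
    unfold decr.
    specialize (H i Hi). rewrite visits_removelast in H by auto. fold l in H.
    destruct (Nat.eqb_spec i l); destruct (Nat.eqb_spec l i); subst; lia.
  - rewrite count_indicator_false by auto. destruct (Nat.leb_spec 1 (m l)); auto. symmetry.
    apply count_indicator_false.
    intros H'. apply H. intros i Hi. specialize (H' i Hi). unfold decr in H'.
    rewrite visits_removelast by auto. fold l.
    destruct (Nat.eqb_spec i l); destruct (Nat.eqb_spec l i); subst; lia. Qed.

Definition last_count_prob k mu Kt N m z :=
  expect k mu Kt (S N)
    (fun p => if Nat.eqb (last p 0%nat) z then count_indicator k m (removelast p) else 0).

Lemma last_count_prob_0 k mu Kt m z : (z < k)%nat ->
  last_count_prob k mu Kt 0 m z = mu z * count_indicator k m nil.
Proof. intros Hz. unfold last_count_prob. rewrite expect_front. simpl paths.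
  rewrite <- (rsum_delta k z (fun x => mu x * count_indicator k m nil) Hz).
  apply rsum_ext. intros x _. simpl. destruct (Nat.eqb x z); ring. Qed.

Lemma last_count_prob_S k mu Kt N m z : (z < k)%nat ->
  last_count_prob k mu Kt (S N) m z =
  rsum k (fun y =>
    (if Nat.leb 1 (m y) then last_count_prob k mu Kt N (decr m y) y else 0) * Kt (S N) y z).
Proof. intros Hz. unfold last_count_prob at 1. rewrite expect_snoc by lia.
  rewrite (expect_ext _ _ _ _ _ (fun p => Kt (S N) (last p 0%nat) z * count_indicator k m p)).
  2:{ intros p _.
      rewrite <- (rsum_delta k z (fun w => Kt (S N) (last p 0%nat) w * count_indicator k m p) Hz).
      apply rsum_ext. intros w _. rewrite last_last, removelast_last.
      destruct (Nat.eqb w z); ring. }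
  rewrite (expect_last_decomp k mu Kt (S N) (fun y p => Kt (S N) y z * count_indicator k m p))
    by lia.
  apply rsum_ext. intros y Hy. destruct (Nat.leb_spec 1 (m y)).
  - transitivity (Kt (S N) y z * last_count_prob k mu Kt N (decr m y) y); [|ring].
    unfold last_count_prob. rewrite <- expect_scal. apply expect_ext. intros p Hp.
    destruct (Nat.eqb_spec (last p 0%nat) y); [|ring].
    rewrite count_indicator_removelast. subst y.
    destruct (Nat.leb_spec 1 (m (last p 0%nat))); [ring|lia].
    apply (paths_nonnil k (S N) p); auto; lia. apply (last_paths k (S N) p); auto; lia.
  - rewrite Rmult_0_l. rewrite (expect_ext _ _ _ _ _ (fun _ => 0 * 0)). rewrite expect_scal; ring.
    intros p Hp. destruct (Nat.eqb_spec (last p 0%nat) y); [|ring].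
    rewrite count_indicator_removelast. subst y.
    destruct (Nat.leb_spec 1 (m (last p 0%nat))); [lia|ring].
    apply (paths_nonnil k (S N) p); auto; lia. apply (last_paths k (S N) p); auto; lia. Qed.

Definition fact_prod k m := rprod k (fun i => INR (fact (m i))).

Lemma fact_prod_dec k m y : (y < k)%nat -> (1 <= m y)%nat ->
  INR (m y) * fact_prod k (decr m y) = fact_prod k m.
Proof. intros Hy H1. unfold fact_prod, decr.
  rewrite (rprod_ext k (fun i => INR (fact (if Nat.eqb i y then (m i - 1)%nat else m i)))
      (fun i => if Nat.eqb i y then INR (fact (m y - 1)) else INR (fact (m i)))).
  rewrite (rprod_ext k (fun i => INR (fact (m i)))
      (fun i => if Nat.eqb i y then INR (fact (m y)) else INR (fact (m i)))).
  rewrite (rprod_change k y (INR (fact (m y - 1)))) by auto.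
  rewrite (rprod_change k y (INR (fact (m y)))) by auto.
  destruct (m y) as [|a] eqn:Ea; [lia|]. replace (S a - 1)%nat with a by lia.
  rewrite fact_simpl, mult_INR. ring.
  all: intros i Hi; destruct (Nat.eqb_spec i y); subst; auto. Qed.

Lemma fact_prod_zero k m : (forall i, (i < k)%nat -> m i = 0%nat) -> fact_prod k m = 1.
Proof. intros H. unfold fact_prod. induction k; simpl; auto. rewrite IHk by (intros; apply H; lia).
  rewrite H by lia. simpl; ring. Qed.

Lemma limit_coef_prob k mu Kt N m z : nsum k m = N -> (z < k)%nat ->
  limit_coef k mu Kt N m z = fact_prod k m / INR (fact N) * last_count_prob k mu Kt N m z.
Proof. revert m z. induction N; intros m z Hm Hz.
  - simpl limit_coef. rewrite last_count_prob_0 by auto.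
    rewrite fact_prod_zero by (apply nsum_zero; auto). rewrite count_indicator_true. simpl; field.
    intros i Hi. rewrite (nsum_zero k m Hm i Hi). auto.
  - cbn [limit_coef]. rewrite last_count_prob_S by auto. rewrite <- rsum_scal, <- rsum_scal.
    apply rsum_ext. intros y Hy.
    destruct (Nat.leb_spec 1 (m y)).
    + rewrite IHN. rewrite <- (fact_prod_dec k m y) by auto.
      replace (fact (S N)) with (S N * fact N)%nat by auto.
      rewrite mult_INR. assert (INR (S N) <> 0) by (apply not_0_INR; lia).
      assert (INR (fact N) <> 0) by (apply not_0_INR, fact_neq_0). field; auto.
      rewrite nsum_dec by auto. lia. auto.
    + replace (m y) with 0%nat by lia. simpl INR. ring. Qed.

Lemma last_count_prob_sum k mu Kt N m : stochastic_kernels k Kt -> (1 <= N)%nat ->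
  rsum k (fun z => last_count_prob k mu Kt N m z) =
    Pevent k mu Kt N (fun p => forallb (fun i => Nat.eqb (visits p i) (m i)) (seq 0 k)).
Proof. intros HL HN. unfold last_count_prob.
  rewrite <- (expect_last_decomp k mu Kt (S N) (fun _ p => count_indicator k m (removelast p))) by
      lia.
  rewrite expect_snoc by auto. rewrite (expect_ext _ _ _ _ _ (fun p => count_indicator k m p)).
  2:{ intros p Hp. rewrite (rsum_ext _ _ (fun w => count_indicator k m p * Kt N (last p 0%nat) w)).
      rewrite rsum_scal.
      change (rsum k (fun w => Kt N (last p 0%nat) w)) with (rsum k (Kt N (last p 0%nat))).
      rewrite (proj2 (HL N HN)). ring. eapply last_paths; eauto. intros.
      rewrite removelast_last; ring. }
  unfold expect, Pevent. apply lsum_map_ext. intros p _. unfold count_indicator.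
  destruct (forallb _ _); ring. Qed.

Lemma rprod_single k i (F : nat -> R) : (i < k)%nat ->
  rprod k (fun j => if Nat.eqb j i then F j else 1) = F i.
Proof. intros Hi. rewrite (rprod_ext k _ (fun j => if Nat.eqb j i then F i else 1)).
  - rewrite rprod_change by auto. rewrite (rprod_ext k _ (fun _ => 1)), rprod_ones; [ring|].
    intros j _; destruct (Nat.eqb j i); auto.
  - intros j _; destruct (Nat.eqb_spec j i); subst; auto. Qed.

Lemma monomial_single k i N : (i < k)%nat ->
  monomial k (fun j => if Nat.eqb j i then N else 0%nat) = fun x => x i ^ N.
Proof. intros Hi. apply functional_extensionality. intros x. unfold monomial.
  rewrite <- (rprod_single k i (fun j => x j ^ N)) by auto. apply rprod_ext. intros j _.
  destruct (Nat.eqb j i); auto. Qed.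

Lemma counts_single_iff k i p : (i < k)%nat -> (forall x, In x p -> (x < k)%nat) ->
  forallb (fun j => Nat.eqb (visits p j) (if Nat.eqb j i then length p else 0%nat)) (seq 0 k)
  = forallb (fun x => Nat.eqb x i) p.
Proof. intros Hi Hk. destruct (forallb (fun x => Nat.eqb x i) p) eqn:E2.
  - rewrite forallb_forall in E2. apply forallb_forall. intros j Hj. apply in_seq in Hj.
    apply Nat.eqb_eq.
    destruct (Nat.eqb_spec j i).
    + subst j. rewrite visits_all; auto. intros x Hx. apply Nat.eqb_eq; auto.
    + apply count_occ_not_In. intros Hin. apply n. apply Nat.eqb_eq. apply E2; auto.
  - apply Bool.not_true_iff_false. intros E1. apply Bool.not_true_iff_false in E2. apply E2.
    apply forallb_forall. intros x Hx. apply Nat.eqb_eq. destruct (Nat.eq_dec x i); auto. exfalso.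
    rewrite forallb_forall in E1. specialize (E1 x ltac:(apply in_seq; specialize (Hk x Hx); lia)).
    apply Nat.eqb_eq in E1. destruct (Nat.eqb_spec x i); [lia|].
    apply (count_occ_In Nat.eq_dec) in Hx. unfold visits in E1. lia. Qed.

Lemma nu_pure_power k (mu : vec) (Kt : nat -> mat) (nu : (vec -> R) -> R) :
  (forall (m : nat -> nat) (N : nat), N = fold_right plus 0%nat (map m (seq 0 k)) -> (0 < N)%nat ->
      nu (monomial k m) = rprod k (fun i => INR (fact (m i))) / INR (fact N) *
        Pevent k mu Kt N (fun p => forallb (fun i => Nat.eqb (visits p i) (m i)) (seq 0 k))) ->
  forall (i N : nat), (i < k)%nat -> (0 < N)%nat ->
      nu (fun x => x i ^ N) = Pevent k mu Kt N (fun p => forallb (fun x => Nat.eqb x i) p).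
Proof. intros Hmom i N Hi HN. set (m := fun j => if Nat.eqb j i then N else 0%nat).
  assert (Hm : N = fold_right plus 0%nat (map m (seq 0 k))) by
      (rewrite nsum_fold; unfold m; rewrite nsum_single; auto).
  rewrite <- (monomial_single k i N Hi). fold m. rewrite (Hmom m N Hm HN).
  replace (rprod k (fun j => INR (fact (m j)))) with (INR (fact N)).
  2:{ rewrite <- (rprod_single k i (fun _ => INR (fact N))) by auto. apply rprod_ext. intros j _.
      unfold m. destruct (Nat.eqb j i); auto. }
  unfold Rdiv. rewrite Rinv_r, Rmult_1_l by (apply not_0_INR, fact_neq_0).
  unfold Pevent. apply lsum_map_ext. intros p Hp. apply paths_in in Hp. destruct Hp as [Hl Hk].
  unfold m. rewrite <- Hl, counts_single_iff; auto. Qed.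

(** * Continuity on the unit cube *)

Lemma cont_const k c : continuous_k k (fun _ => c).
Proof. intros x eps He. exists 1. split. lra. intros. rewrite Rminus_diag_eq, Rabs_R0; auto. Qed.

Lemma cont_coord k i : (i < k)%nat -> continuous_k k (fun x => x i).
Proof. intros Hi x eps He. exists eps. split; auto. Qed.

Lemma cont_mult k f g : continuous_k k f -> continuous_k k g -> continuous_k k (fun x => f x * g x).
Proof. intros Hf Hg x eps He. set (a := Rabs (f x)). set (b := Rabs (g x)).
  assert (Ha : 0 <= a) by apply Rabs_pos. assert (Hb : 0 <= b) by apply Rabs_pos.
  destruct (Hf x (Rmin 1 (eps / (2 * (b + 1))))
      ltac:(apply Rmin_pos; [lra|apply Rdiv_lt_0_compat; lra])) as [d1 [Hd1 H1]].
  destruct (Hg x (eps / (2 * (a + 1))) ltac:(apply Rdiv_lt_0_compat; lra)) as [d2 [Hd2 H2]].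
  exists (Rmin d1 d2). split. apply Rmin_pos; auto. intros y Hy.
  assert (Hy1 : forall i, (i < k)%nat -> Rabs (y i - x i) < d1) by
      (intros i Hi; specialize (Hy i Hi); pose proof (Rmin_l d1 d2); lra).
  assert (Hy2 : forall i, (i < k)%nat -> Rabs (y i - x i) < d2) by
      (intros i Hi; specialize (Hy i Hi); pose proof (Rmin_r d1 d2); lra).
  specialize (H1 y Hy1). specialize (H2 y Hy2).
  pose proof (Rmin_l 1 (eps / (2 * (b + 1)))). pose proof (Rmin_r 1 (eps / (2 * (b + 1)))).
  replace (f y * g y - f x * g x) with (f y * (g y - g x) + g x * (f y - f x)) by ring.
  eapply Rle_lt_trans. apply Rabs_triang. rewrite !Rabs_mult. fold b.
  assert (Rabs (f y) <= a + 1). { unfold a. pose proof (Rabs_triang_inv (f y) (f x)). lra. }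
  assert (Rabs (f y) * Rabs (g y - g x) <= (a + 1) * Rabs (g y - g x)) by
      (apply Rmult_le_compat_r; [apply Rabs_pos|auto]).
  assert ((a + 1) * Rabs (g y - g x) < (a + 1) * (eps / (2 * (a + 1)))) by
      (apply Rmult_lt_compat_l; lra).
  replace ((a + 1) * (eps / (2 * (a + 1)))) with (eps / 2) in H5 by (field; lra).
  assert (b * Rabs (f y - f x) <= b * (eps / (2 * (b + 1)))) by (apply Rmult_le_compat_l; lra).
  assert (b * (eps / (2 * (b + 1))) < eps / 2).
  { replace (b * (eps / (2 * (b + 1)))) with ((eps / 2) * (b / (b + 1))) by (field; lra).
    assert (b / (b + 1) < 1).
    { apply Rmult_lt_reg_r with (b + 1). lra.
      unfold Rdiv. rewrite Rmult_assoc, Rinv_l by lra. lra. }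
    assert (0 <= b / (b + 1)) by (apply Rmult_le_pos; [lra|left; apply Rinv_0_lt_compat; lra]).
    nra. }
  lra. Qed.

Lemma cont_pow k f p : continuous_k k f -> continuous_k k (fun x => f x ^ p).
Proof. intros Hf. induction p. simpl. apply cont_const. simpl. apply cont_mult; auto. Qed.

Lemma cont_monomial k m : continuous_k k (monomial k m).
Proof. unfold monomial.
  assert (forall j, (j <= k)%nat -> continuous_k k (fun x => rprod j (fun i => x i ^ m i))).
  { induction j; intros Hj; simpl; [apply cont_const|].
    apply cont_mult; [apply IHj; lia|]. apply cont_pow, cont_coord. lia. }
  apply H; auto. Qed.

(* Coquelicot states compactness of boxes on the tuple type [Tn n R]. *)
Fixpoint toT (n off : nat) (x : vec) : Tn n R :=
  match n with O => tt | S n' => (x off, toT n' (S off) x) end.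

Fixpoint ofT (n off : nat) : Tn n R -> vec :=
  match n return Tn n R -> vec with
  | O => fun _ _ => 0
  | S n' => fun t => let (a, t') := t in fun i => if Nat.eqb i off then a else ofT n' (S off) t' i
  end.

Fixpoint cstT (n : nat) (c : R) : Tn n R := match n with O => tt | S n' => (c, cstT n' c) end.

Lemma ofT_toT n off x i : (off <= i < off + n)%nat -> ofT n off (toT n off x) i = x i.
Proof. revert off; induction n; intros off H; simpl. lia. destruct (Nat.eqb_spec i off).
  subst; auto. apply IHn. lia. Qed.

Lemma bounded_toT n off x : (forall i, (off <= i < off + n)%nat -> 0 <= x i <= 1) ->
  bounded_n n (cstT n 0) (cstT n 1) (toT n off x).
Proof. revert off; induction n; intros off H; simpl; auto. split. apply H; lia. apply IHn.
  intros; apply H; lia. Qed.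

Lemma close_ofT n off d x t : close_n n d x t -> forall i, (off <= i < off + n)%nat ->
  Rabs (ofT n off x i - ofT n off t i) < d.
Proof. revert off; induction n; intros off H i Hi; simpl. lia.
  destruct x as [a x']; destruct t as [b t']. simpl in H. destruct H as [H1 H2].
  destruct (Nat.eqb_spec i off); auto. apply IHn; auto. lia. Qed.

Definition unif_cont_cube k (f : vec -> R) := forall eps, 0 < eps -> exists d, 0 < d /\ forall x y,
  (forall i, (i < k)%nat -> 0 <= x i <= 1) -> (forall i, (i < k)%nat -> 0 <= y i <= 1) ->
  (forall i, (i < k)%nat -> Rabs (x i - y i) < d) -> Rabs (f x - f y) < eps.

Lemma continuous_unif_cont k f : continuous_k k f -> unif_cont_cube k f.
Proof. intros Hf eps He.
  assert (Hd : forall t : Tn k R, { d : R | 0 < d /\ forall y,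
    (forall i, (i < k)%nat -> Rabs (y i - ofT k 0 t i) < d) ->
    Rabs (f y - f (ofT k 0 t)) < eps / 2 }).
  { intros t. apply constructive_indefinite_description. apply Hf. lra. }
  set (delta := fun t => mkposreal (proj1_sig (Hd t) / 2)
      ltac:(pose proof (proj1 (proj2_sig (Hd t))); lra)).
  destruct (compactness_value k (cstT k 0) (cstT k 1) delta) as [d Hc].
  exists d. split. apply cond_pos. intros x y Hx Hy Hxy.
  specialize (Hc (toT k 0 x) (bounded_toT k 0 x ltac:(intros; apply Hx; lia))).
  apply NNPP. intros Hneg. apply Hc. intros [t [Ht1 [Ht2 Ht3]]]. apply Hneg.
  pose proof (proj1 (proj2_sig (Hd t))) as Hdt. pose proof (proj2 (proj2_sig (Hd t))) as Hcont.
  set (dt := proj1_sig (Hd t)) in *.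
  assert (Hdelta : pos (delta t) = dt / 2) by (unfold delta; simpl; auto).
  rewrite Hdelta in Ht2, Ht3.
  assert (Hxt : forall i, (i < k)%nat -> Rabs (x i - ofT k 0 t i) < dt / 2).
  { intros i Hi. rewrite <- (ofT_toT k 0 x i) by lia. apply close_ofT with (n := k); auto; lia. }
  assert (H1 : Rabs (f x - f (ofT k 0 t)) < eps / 2).
  { apply Hcont. intros i Hi. specialize (Hxt i Hi). lra. }
  assert (H2 : Rabs (f y - f (ofT k 0 t)) < eps / 2).
  { apply Hcont. intros i Hi. specialize (Hxt i Hi). specialize (Hxy i Hi).
    replace (y i - ofT k 0 t i) with ((y i - x i) + (x i - ofT k 0 t i)) by ring.
    eapply Rle_lt_trans. apply Rabs_triang. rewrite <- Rabs_Ropp in Hxy.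
    replace (- (x i - y i)) with (y i - x i) in Hxy by ring. lra. }
  replace (f x - f y) with ((f x - f (ofT k 0 t)) - (f y - f (ofT k 0 t))) by ring.
  eapply Rle_lt_trans. apply Rabs_triang. rewrite Rabs_Ropp. lra. Qed.

Lemma unif_cont_cube_bounded k f : unif_cont_cube k f ->
  exists B, 0 <= B /\ forall x, (forall i, (i < k)%nat -> 0 <= x i <= 1) -> Rabs (f x) <= B.
Proof. intros Hf. destruct (Hf 1 ltac:(lra)) as [d [Hd H]].
  destruct (INR_archimed d 1 Hd) as [R HR]. assert (HR0 : (1 <= R)%nat).
  { destruct R. simpl in HR. lra. lia. }
  assert (HRp : 0 < INR R) by (apply lt_0_INR; lia).
  exists (Rabs (f (fun _ => 0)) + INR R). split. pose proof (Rabs_pos (f (fun _ => 0))).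
  pose proof (pos_INR R). lra.
  intros x Hx.
  assert (Step : forall j, (j <= R)%nat ->
    Rabs (f (fun i => INR j / INR R * x i) - f (fun _ => 0)) <= INR j).
  { induction j; intros Hj.
    - simpl. replace (fun i => 0 / INR R * x i) with (fun _ : nat => 0).
      rewrite Rminus_diag_eq, Rabs_R0 by auto. lra.
      apply functional_extensionality; intros; unfold Rdiv; ring.
    - specialize (IHj ltac:(lia)).
      assert (Hin : forall j', (j' <= R)%nat -> forall i, (i < k)%nat ->
        0 <= INR j' / INR R * x i <= 1).
      { intros j' Hj' i Hi. destruct (Hx i Hi). assert (INR j' <= INR R) by (apply le_INR; auto).
        pose proof (pos_INR j').
        assert (0 <= INR j' / INR R <= 1).
        { split. apply Rmult_le_pos; auto. left; apply Rinv_0_lt_compat; auto.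
          apply Rmult_le_reg_r with (INR R); auto. unfold Rdiv. rewrite Rmult_assoc, Rinv_l by lra.
          lra. } nra. }
      assert (Hc :
        Rabs (f (fun i => INR (S j) / INR R * x i) - f (fun i => INR j / INR R * x i)) < 1).
      { apply H; try (apply Hin; lia). intros i Hi. rewrite S_INR.
        replace ((INR j + 1) / INR R * x i - INR j / INR R * x i) with (x i / INR R) by
            (field; lra).
        destruct (Hx i Hi).
        rewrite Rabs_pos_eq by (apply Rmult_le_pos; auto; left; apply Rinv_0_lt_compat; auto).
        apply Rmult_lt_reg_r with (INR R); auto. unfold Rdiv. rewrite Rmult_assoc, Rinv_l by lra.
        lra. }
      pose proof (S_INR j). replace (f (fun i => INR (S j) / INR R * x i) - f (fun _ => 0)) with
        ((f (fun i => INR (S j) / INR R * x i) - f (fun i => INR j / INR R * x i)) +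
            (f (fun i => INR j / INR R * x i) - f (fun _ => 0))) by ring.
      eapply Rle_trans. apply Rabs_triang. lra. }
  specialize (Step R (le_n _)). replace (fun i => INR R / INR R * x i) with x in Step.
  pose proof (Rabs_triang_inv (f x) (f (fun _ => 0))). lra.
  apply functional_extensionality; intros; field; lra. Qed.

(** * Freezing an initial segment of the path *)

Definition frozen_prefix_expect k (L : nat -> mat) (a b : nat) (f : vec -> R) (x : nat) : R :=
  lsum (map (fun r => trans L a x r * f (occ (a + b) (repeat x a ++ r))) (paths k b)).

Lemma Eocc_prefix_approx k q L f a b eps :
  stochastic_kernels k L -> stochastic_vec k q -> (1 <= a)%nat ->
  (forall p r, In p (paths k a) -> In r (paths k b) ->
     Rabs (f (occ (a + b) (p ++ r)) - f (occ (a + b) (repeat (last p 0%nat) a ++ r))) <= eps) ->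
  Rabs (expect k q L (a + b) (fun p => f (occ (a + b) p))
    - rsum k (fun x => marginal k q L a x * frozen_prefix_expect k L a b f x)) <= eps.
Proof. intros HL Hq Ha H. rewrite expect_split by auto.
  rewrite <- (expect_lastfun k q L a (frozen_prefix_expect k L a b f)) by auto.
  rewrite <- expect_minus. apply expect_bound; auto. intros p Hp. unfold frozen_prefix_expect.
  rewrite <- lsum_map_minus.
  rewrite (lsum_map_ext _ _ (fun r => trans L a (last p 0%nat) r *
    (f (occ (a + b) (p ++ r)) - f (occ (a + b) (repeat (last p 0%nat) a ++ r))))).
  2:{ intros; ring. }
  apply lsum_trans_bound; auto. apply (last_paths k a p); auto. Qed.

Lemma Eocc_frozen_close k q L f a b e d :
  stochastic_kernels k L -> stochastic_vec k q -> (1 <= a)%nat -> INR a < INR (a + b) * d ->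
  (forall x y, (forall i, (i < k)%nat -> 0 <= x i <= 1) ->
     (forall i, (i < k)%nat -> 0 <= y i <= 1) ->
     (forall i, (i < k)%nat -> Rabs (x i - y i) < d) -> Rabs (f x - f y) < e) ->
  Rabs (Eocc k q L f (a + b)
    - rsum k (fun x => marginal k q L a x * frozen_prefix_expect k L a b f x)) <= e.
Proof. intros HL Hq Ha Had Hf. apply Eocc_prefix_approx; auto. intros p r Hp Hr. left.
  destruct (paths_in k a p Hp) as [Hlp _]. destruct (paths_in k b r Hr) as [Hlr _]. apply Hf.
  - intros i _. apply occ_range; [lia|]. rewrite length_app; lia.
  - intros i _. apply occ_range; [lia|]. rewrite length_app, repeat_length; lia.
  - intros i _. apply occ_prefix_close with a; auto; [lia|]. apply repeat_length. Qed.

Lemma frozen_prefix_expect_bound k L a b f Bf x :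
  stochastic_kernels k L -> (1 <= a)%nat -> (x < k)%nat ->
  (forall y, (forall i, (i < k)%nat -> 0 <= y i <= 1) -> Rabs (f y) <= Bf) ->
  Rabs (frozen_prefix_expect k L a b f x) <= Bf.
Proof. intros HL Ha Hx HBf. apply lsum_trans_bound; auto. intros r Hr. apply HBf. intros i _.
  destruct (paths_in k b r Hr) as [Hlr _]. apply occ_range; [lia|].
  rewrite length_app, repeat_length; lia. Qed.

Lemma frozen_prefix_expect_diff k L L' a b f Bf C x :
  stochastic_kernels k L -> stochastic_kernels k L' ->
  (2 <= a)%nat -> (x < k)%nat -> 0 <= C -> 0 <= Bf ->
  (forall s, (1 <= s)%nat -> forall y j, (y < k)%nat -> (j < k)%nat ->
     Rabs (L' s y j - L s y j) <= C / INR s ^ 2) ->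
  (forall y, (forall i, (i < k)%nat -> 0 <= y i <= 1) -> Rabs (f y) <= Bf) ->
  Rabs (frozen_prefix_expect k L a b f x - frozen_prefix_expect k L' a b f x) <=
    Bf * (INR k * C / INR (a - 1)).
Proof. intros HL HL' Ha Hx HC HBf0 HLL' HBf. unfold frozen_prefix_expect.
  assert (HF : forall r, In r (paths k b) -> Rabs (f (occ (a + b) (repeat x a ++ r))) <= Bf).
  { intros r Hr. apply HBf. intros i _. destruct (paths_in k b r Hr) as [Hlr _].
    apply occ_range; [lia|]. rewrite length_app, repeat_length; lia. }
  rewrite <- lsum_map_minus. eapply Rle_trans. apply lsum_map_abs.
  apply Rle_trans with
      (lsum (map (fun r => Bf * Rabs (trans L a x r - trans L' a x r)) (paths k b))).
  { apply lsum_map_le. intros r Hr.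
    rewrite <- Rmult_minus_distr_r, Rabs_mult, Rmult_comm.
    apply Rmult_le_compat_r; [apply Rabs_pos|auto]. }
  rewrite lsum_map_scal. apply Rmult_le_compat_l; auto.
  eapply Rle_trans.
  apply (trans_total_variation k L L' (fun s => INR k * C / INR s ^ 2)); auto; try lia.
  - intros s Hs y Hy. replace (INR k * C / INR s ^ 2) with (rsum k (fun _ => C / INR s ^ 2))
      by (rewrite rsum_const; unfold Rdiv; ring).
    apply rsum_le. intros j Hj. rewrite <- Rabs_Ropp.
    replace (- (L s y j - L' s y j)) with (L' s y j - L s y j) by ring.
    apply HLL'; auto; lia.
  - rewrite (rsum_ext _ _ (fun t => INR k * C * / INR (a + t) ^ 2)) by (intros; unfold Rdiv; auto).
    rewrite rsum_scal. unfold Rdiv. apply Rmult_le_compat_l.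
    apply Rmult_le_pos; auto; apply pos_INR.
    pose proof (inv_square_tail a b Ha).
    assert (0 < / INR (a - 1 + b)) by (apply Rinv_0_lt_compat, lt_0_INR; lia).
    lra. Qed.

Lemma mixture_diff_bound k (p q h h' : vec) B delta : stochastic_vec k q ->
  (forall x, (x < k)%nat -> Rabs (h x) <= B) ->
  (forall x, (x < k)%nat -> Rabs (h x - h' x) <= delta) ->
  Rabs (rsum k (fun x => p x * h x) - rsum k (fun x => q x * h' x))
  <= rsum k (fun x => Rabs (p x - q x)) * B + delta.
Proof. intros [Hq0 Hq1] Hh Hd. rewrite <- rsum_minus. eapply Rle_trans. apply rsum_abs.
  apply Rle_trans with (rsum k (fun x => Rabs (p x - q x) * B + q x * delta)).
  - apply rsum_le. intros x Hx.
    replace (p x * h x - q x * h' x) with ((p x - q x) * h x + q x * (h x - h' x)) by ring.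
    eapply Rle_trans. apply Rabs_triang. rewrite !Rabs_mult, (Rabs_pos_eq (q x)) by auto.
    apply Rplus_le_compat; apply Rmult_le_compat_l; auto; apply Rabs_pos.
  - rewrite rsum_plus, rsum_scal_r, rsum_scal_r, Hq1. lra. Qed.

(** * A perturbed linear recursion *)

Section PerturbedRecursion.

Variables (k : nat) (G : mat) (M N : nat) (v g : nat -> nat -> R) (c d : nat -> R).
Hypothesis HG : is_generator k G.
Hypothesis HN : (1 <= N)%nat.
Hypothesis HM : forall n, (M < n)%nat -> forall i j, (i < k)%nat -> (j < k)%nat ->
  0 <= idm i j + G i j / INR n.
Hypothesis Hrec : forall n, (M < n)%nat -> (1 <= n)%nat -> forall y, (y < k)%nat ->
  v (S n) y * (1 + / INR n) ^ N =
  rsum k (fun x => v n x * (idm x y + G x y / INR n)) + g n y / INR n.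
Hypothesis Hg : forall y, (y < k)%nat -> Un_cv (fun n => g n y) (d y).
Hypothesis Hc : forall z, (z < k)%nat -> INR N * c z - rsum k (fun x => c x * G x z) = d z.

Let dist n := rsum k (fun y => Rabs (v n y - c y)).
Let err n := rsum k (fun y => Rabs (g n y - d y))
  + INR n * Rabs ((1 + / INR n) ^ N - 1 - INR N / INR n) * rsum k (fun y => Rabs (c y)).

Lemma perturbed_step_identity n y : (M < n)%nat -> (1 <= n)%nat -> (y < k)%nat ->
  (1 + / INR n) ^ N * (v (S n) y - c y) =
  rsum k (fun x => (v n x - c x) * (idm x y + G x y / INR n)) + (g n y - d y) / INR n
  + (1 + INR N / INR n - (1 + / INR n) ^ N) * c y.
Proof. intros HMn Hn1 Hy. assert (0 < INR n) by (apply lt_0_INR; lia).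
  assert (E2 : rsum k (fun x => c x * (idm x y + G x y / INR n)) =
    c y + (INR N * c y - d y) / INR n).
  { rewrite (rsum_ext _ _ (fun x => c x * idm x y + / INR n * (c x * G x y))) by
      (intros; unfold Rdiv; ring).
    rewrite rsum_plus, rsum_scal, idm_mul_r by auto. rewrite <- (Hc y Hy). field. lra. }
  rewrite (rsum_ext _ _
      (fun x => v n x * (idm x y + G x y / INR n) - c x * (idm x y + G x y / INR n)))
    by (intros; ring).
  rewrite rsum_minus, E2. pose proof (Hrec n HMn Hn1 y Hy). unfold Rdiv in *. lra. Qed.

Lemma perturbed_step_bound n : (M < n)%nat -> (1 <= n)%nat ->
  (1 + / INR n) ^ N * dist (S n) <= dist n + err n / INR n.
Proof. intros HMn Hn1. assert (Hp : 0 < INR n) by (apply lt_0_INR; lia).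
  set (t := / INR n). assert (Ht : 0 < t) by (apply Rinv_0_lt_compat; auto).
  set (A := fun x y => idm x y + G x y / INR n).
  assert (HA : forall x y, (x < k)%nat -> (y < k)%nat -> 0 <= A x y) by (intros; apply HM; auto).
  assert (HAr : forall x, (x < k)%nat -> rsum k (A x) = 1).
  { intros x Hx. unfold A. rewrite rsum_plus, idm_row by auto. unfold Rdiv. rewrite rsum_scal_r.
    change (rsum k (fun j => G x j)) with (rsum k (G x)). rewrite gen_rowsum; auto. ring. }
  assert (Hrho : 0 <= (1 + t) ^ N) by (apply pow_le; lra).
  unfold dist. rewrite <- rsum_scal.
  apply Rle_trans with (rsum k (fun y =>
    rsum k (fun x => Rabs (v n x - c x) * A x y) + Rabs (g n y - d y) * t
    + Rabs (1 + INR N * t - (1 + t) ^ N) * Rabs (c y))).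
  - apply rsum_le. intros y Hy.
    replace ((1 + t) ^ N * Rabs (v (S n) y - c y)) with (Rabs ((1 + t) ^ N * (v (S n) y - c y)))
      by (rewrite Rabs_mult, (Rabs_pos_eq ((1 + t) ^ N)); auto).
    unfold t. rewrite perturbed_step_identity by auto. fold t.
    replace ((g n y - d y) / INR n) with ((g n y - d y) * t) by (unfold t, Rdiv; ring).
    replace (INR N / INR n) with (INR N * t) by (unfold t, Rdiv; ring).
    eapply Rle_trans. apply Rabs_triang. eapply Rle_trans. apply Rplus_le_compat_r.
    apply Rabs_triang.
    rewrite !Rabs_mult, (Rabs_pos_eq t) by lra. apply Rplus_le_compat_r. apply Rplus_le_compat_r.
    eapply Rle_trans. apply rsum_abs. apply rsum_le. intros x Hx. unfold A.
    rewrite Rabs_mult, (Rabs_pos_eq (idm x y + G x y / INR n)) by (apply HM; auto). lra.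
  - rewrite !rsum_plus, rsum_swap, rsum_scal_r, rsum_scal.
    rewrite (rsum_ext k (fun x => rsum k (fun y => Rabs (v n x - c x) * A x y))
        (fun x => Rabs (v n x - c x))).
    2:{ intros x Hx. rewrite rsum_scal, HAr by auto. ring. }
    unfold err. apply Req_le.
    replace (Rabs (1 + INR N * t - (1 + t) ^ N)) with
        (Rabs ((1 + / INR n) ^ N - 1 - INR N / INR n)).
    + unfold t. field. lra.
    + rewrite <- Rabs_Ropp. f_equal. unfold t, Rdiv. ring. Qed.

Lemma perturbed_step_averaged n : (M < n)%nat -> (1 <= n)%nat ->
  0 <= dist n /\ dist (S n) <= INR n / INR (S n) * dist n + err n / INR n.
Proof. intros HMn Hn1. assert (Hp : 0 < INR n) by (apply lt_0_INR; lia).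
  assert (HX0 : 0 <= dist n) by (apply rsum_nonneg; intros; apply Rabs_pos).
  assert (HXS0 : 0 <= dist (S n)) by (apply rsum_nonneg; intros; apply Rabs_pos).
  assert (HE : 0 <= err n).
  { unfold err. apply Rplus_le_le_0_compat. apply rsum_nonneg; intros; apply Rabs_pos.
    repeat apply Rmult_le_pos; try apply pos_INR; try apply Rabs_pos.
    apply rsum_nonneg; intros; apply Rabs_pos. }
  pose proof (perturbed_step_bound n HMn Hn1) as Hb. split; auto.
  assert (Hrho : 1 + / INR n <= (1 + / INR n) ^ N).
  { assert (0 <= / INR n) by (left; apply Rinv_0_lt_compat; auto).
    pose proof (pow_1_plus_remainder (/ INR n) N H) as [R1 _].
    assert (/ INR n <= INR N * / INR n).
    { rewrite <- (Rmult_1_l (/ INR n)) at 1.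
      apply Rmult_le_compat_r; [left; apply Rinv_0_lt_compat; auto|apply (le_INR 1); auto]. }
    lra. }
  assert (Hb1 : (1 + / INR n) * dist (S n) <= dist n + err n / INR n) by nra.
  rewrite S_INR. apply Rmult_le_reg_l with ((INR n + 1) / INR n); [apply Rdiv_lt_0_compat; lra|].
  replace ((INR n + 1) / INR n * dist (S n)) with ((1 + / INR n) * dist (S n)) by (field; lra).
  replace ((INR n + 1) / INR n * (INR n / (INR n + 1) * dist n + err n / INR n))
    with (dist n + err n / INR n + err n / INR n / INR n) by (field; lra).
  assert (0 <= err n / INR n / INR n) by
      (unfold Rdiv; repeat apply Rmult_le_pos; auto; left; apply Rinv_0_lt_compat; auto).
  lra. Qed.

Lemma perturbed_err_cv : Un_cv err 0.
Proof. unfold err. replace 0 with (0 + 0 * rsum k (fun y => Rabs (c y))) by ring. apply CV_plus.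
  - replace 0 with (rsum k (fun _ => 0)) by apply rsum_0. apply cv_rsum. intros y Hy. apply cv_abs0.
    replace 0 with (d y - d y) by ring. apply cv_minus; auto. apply cv_const.
  - apply CV_mult; [|apply cv_const].
    apply (cv_0_squeeze _ (fun n => INR N ^ 2 * 2 ^ N * / INR n) 1).
    + intros n Hn. assert (Hp : 0 < INR n) by (apply lt_0_INR; lia). set (t := / INR n).
      assert (Ht : 0 < t) by (apply Rinv_0_lt_compat; auto).
      assert (Ht1 : t <= 1).
      { unfold t. rewrite <- Rinv_1. apply Rinv_le_contravar. lra. apply (le_INR 1); auto. }
      pose proof (pow_1_plus_remainder t N ltac:(lra)) as [R1 R2].
      replace (INR N / INR n) with (INR N * t) by (unfold t, Rdiv; ring).
      rewrite Rabs_mult, Rabs_Rabsolu, (Rabs_pos_eq (INR n)), (Rabs_pos_eq (_ - _ - _)) by lra.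
      assert ((1 + t) ^ N <= 2 ^ N) by (apply pow_incr; lra).
      assert (INR N ^ 2 * t ^ 2 * (1 + t) ^ N <= INR N ^ 2 * t ^ 2 * 2 ^ N).
      { apply Rmult_le_compat_l; auto. apply Rmult_le_pos; apply pow_le; try lra. apply pos_INR. }
      apply Rle_trans with (INR n * (INR N ^ 2 * t ^ 2 * 2 ^ N)). apply Rmult_le_compat_l; lra.
      right. unfold t. field. lra.
    + replace 0 with (INR N ^ 2 * 2 ^ N * 0) by ring. apply cv_scal. apply cv_inv_n. Qed.

Lemma cv_of_perturbed_recursion x : (x < k)%nat -> Un_cv (fun n => v n x) (c x).
Proof. intros Hx. apply cv_0_iff. apply (cv_0_squeeze _ dist 0).
  - intros n _. apply (rsum_term_le k (fun y => Rabs (v n y - c y))); auto. intros; apply Rabs_pos.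
  - apply (cv_0_of_averaged_recursion dist err (S M)); [lia| |apply perturbed_err_cv].
    intros n Hn. apply perturbed_step_averaged; lia. Qed.

End PerturbedRecursion.

(** * The chains T and Z *)

Section ResolventChain.

Variables (k : nat) (G : mat) (mu : vec) (M : nat) (Kt : nat -> mat).
Hypothesis HG : is_generator k G.
Hypothesis HGnz : forall i j, (i < k)%nat -> (j < k)%nat -> G i j <> 0.
Hypothesis Hmu : stochastic_vec k mu.
Hypothesis HmuG : forall j, (j < k)%nat -> rsum k (fun i => mu i * G i j) = 0.
Hypothesis HM : forall n, (M < n)%nat -> forall i j, (i < k)%nat -> (j < k)%nat ->
  0 <= idm i j + G i j / INR n.
Hypothesis HK : forall n, (1 <= n)%nat -> is_resolvent k G n (Kt n).

Lemma Kker_stochastic : stochastic_kernels k (Kker G M).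
Proof. intros n Hn. split.
  - intros i j Hi Hj. unfold Kker. destruct (Nat.ltb_spec M n). apply HM; auto.
    pose proof (idm_nonneg i j); lra.
  - intros i Hi. unfold Kker. rewrite rsum_plus, idm_row by auto. destruct (Nat.ltb_spec M n).
    + unfold Rdiv. rewrite rsum_scal_r. change (rsum k (fun j => G i j)) with (rsum k (G i)).
      rewrite gen_rowsum; auto. lra.
    + rewrite rsum_0; lra. Qed.

Lemma Kker_stationary n y : (y < k)%nat -> rsum k (fun x => mu x * Kker G M n x y) = mu y.
Proof. intros Hy. unfold Kker.
  rewrite (rsum_ext _ _
      (fun x => mu x * idm x y + (if Nat.ltb M n then / INR n else 0) * (mu x * G x y)))
    by (intros; destruct (Nat.ltb M n); unfold Rdiv; ring).
  rewrite rsum_plus, rsum_scal, HmuG, idm_mul_r by auto. ring. Qed.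

Lemma Kker_doeblin : exists g n3, 0 < g /\ (M < n3)%nat /\
  forall n x y, (n3 <= n)%nat -> (x < k)%nat -> (y < k)%nat -> g / INR n <= Kker G M n x y.
Proof.
  destruct (finite_pos_lb2 k k (fun x y => if Nat.eqb x y then 1 else G x y)) as [g [Hg Hgb]].
  { intros i j Hi Hj. destruct (Nat.eqb_spec i j). lra.
    pose proof (gen_offdiag k G i j HG Hi Hj n). pose proof (HGnz i j Hi Hj). lra. }
  destruct (entry_abs_bound k G) as [B [HB0 HB]].
  destruct (INR_archimed 1 (B + g) ltac:(lra)) as [N HN].
  exists g, (max (S M) N). split; [auto|split; [lia|]]. intros n x y Hn Hx Hy.
  assert (Hpos : 0 < INR n) by (apply lt_0_INR; lia).
  assert (HNn : INR N <= INR n) by (apply le_INR; lia).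
  unfold Kker. destruct (Nat.ltb_spec M n); [|lia]. pose proof (Hgb x y Hx Hy) as Hb. unfold idm.
  destruct (Nat.eqb_spec x y).
  - subst. pose proof (HB y y Hy Hy). apply Rabs_bnd in H0. unfold Rdiv.
    apply Rmult_le_reg_r with (INR n); auto.
    rewrite Rmult_plus_distr_r, !Rmult_assoc, Rinv_l by lra. lra.
  - unfold Rdiv. rewrite Rplus_0_l. apply Rmult_le_compat_r; auto.
    left; apply Rinv_0_lt_compat; auto. Qed.

Lemma marginal_cv_stationary q : stochastic_vec k q ->
  Un_cv (fun n => rsum k (fun x => Rabs (marginal k q (Kker G M) n x - mu x))) 0.
Proof. intros Hq.
  assert (Hk : (1 <= k)%nat). { destruct k; [|lia]. destruct Hmu as [_ Hm]. simpl in Hm. lra. }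
  destruct Kker_doeblin as [g [n3 [Hg [Hn3 Hlb]]]].
  apply (cv_0_of_contraction _ (INR k * g) n3);
      [apply Rmult_lt_0_compat; auto; apply lt_0_INR; lia|lia|].
  intros n Hn. split; [apply rsum_nonneg; intros; apply Rabs_pos|].
  assert (Hpos : 0 < INR n) by (apply lt_0_INR; lia).
  set (u := fun x => marginal k q (Kker G M) n x - mu x).
  assert (Hu0 : rsum k u = 0).
  { unfold u. rewrite rsum_minus, marginal_sum by (auto; try apply Kker_stochastic; lia).
    destruct Hmu; lra. }
  rewrite (rsum_ext _ _ (fun y => Rabs (rsum k (fun x => u x * Kker G M n x y)))).
  - replace (INR k * g / INR n) with (INR k * (g / INR n)) by (unfold Rdiv; ring).
    apply doeblin_contraction; [intros x y Hx Hy; apply Hlb; auto| |exact Hu0].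
    intros x Hx. destruct (Kker_stochastic n ltac:(lia)) as [_ Hrow]; auto.
  - intros y Hy. rewrite marginal_rec, <- (Kker_stationary n y), <- rsum_minus by (auto; lia).
    f_equal. apply rsum_ext; intros; unfold u; ring. Qed.

Lemma Kt_stochastic : stochastic_kernels k Kt.
Proof. intros n Hn. apply (resolvent_stochastic k G n); auto. Qed.

Lemma marginal_Kt_stationary n x : (1 <= n)%nat -> (x < k)%nat -> marginal k mu Kt n x = mu x.
Proof. intros Hn. revert x. induction Hn; intros x Hx.
  - unfold marginal. rewrite expect_front. simpl paths. rewrite <- (rsum_delta k x mu Hx).
    apply rsum_ext. intros y _. simpl. destruct (Nat.eqb y x); ring.
  - rewrite marginal_rec by (auto; lia). rewrite (rsum_ext _ _ (fun i => mu i * Kt m i x)).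
    + apply (resolvent_stationary k G m (Kt m) mu); auto; lia.
    + intros i Hi. rewrite IHHn; auto. Qed.

Lemma limit_coef_eq N m z : (z < k)%nat ->
  INR (S N) * limit_coef k mu Kt (S N) m z - rsum k (fun x => limit_coef k mu Kt (S N) m x * G x z)
  = INR (m z) * limit_coef k mu Kt N (decr m z) z.
Proof. intros Hz. set (d := fun y => INR (m y) * limit_coef k mu Kt N (decr m y) y).
  assert (HSN : 0 < INR (S N)) by (apply lt_0_INR; lia).
  assert (E1 : forall y, (y < k)%nat ->
    rsum k (fun x => Kt (S N) y x * G x z) = INR (S N) * (Kt (S N) y z - idm y z)).
  { intros y Hy. pose proof (proj2 (HK (S N) ltac:(lia) y z Hy Hz)) as E.
    unfold mmul, id_minus_gen in E.
    rewrite (rsum_ext _ _ (fun l => Kt (S N) y l * idm l z - / INR (S N) * (Kt (S N) y l * G l z)))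
      in E by (intros; unfold Rdiv; ring).
    rewrite rsum_minus, rsum_scal, idm_mul_r in E by auto. rewrite <- E. field. lra. }
  change (limit_coef k mu Kt (S N) m) with
      (fun z => / INR (S N) * rsum k (fun y => d y * Kt (S N) y z)).
  cbv beta.
  rewrite (rsum_ext k (fun x => / INR (S N) * rsum k (fun y => d y * Kt (S N) y x) * G x z)
     (fun x => rsum k (fun y => / INR (S N) * d y * (Kt (S N) y x * G x z)))).
  2:{ intros x Hx. rewrite Rmult_assoc, <- rsum_scal_r, <- rsum_scal.
      apply rsum_ext; intros; ring. }
  rewrite rsum_swap.
  rewrite (rsum_ext k (fun y => rsum k (fun x => / INR (S N) * d y * (Kt (S N) y x * G x z)))
     (fun y => d y * Kt (S N) y z - d y * idm y z)).
  2:{ intros y Hy. rewrite rsum_scal, E1 by auto. field. lra. }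
  rewrite rsum_minus, idm_mul_r by auto. unfold d. field. lra. Qed.

Lemma wmarginal_scaled_cv q : stochastic_vec k q -> forall N m, nsum k m = N ->
  forall x, (x < k)%nat ->
  Un_cv (fun n => wmarginal k q (Kker G M) m n x / INR n ^ N) (limit_coef k mu Kt N m x).
Proof. intros Hq. induction N; intros m Hm x Hx.
  - simpl limit_coef. apply cv_0_iff.
    apply (cv_0_squeeze _ (fun n => rsum k (fun x => Rabs (marginal k q (Kker G M) n x - mu x))) 1).
    + intros n Hn. rewrite wmarginal_zero by (auto; apply nsum_zero; auto). simpl pow.
      rewrite Rdiv_1_r.
      apply (rsum_term_le k (fun x => Rabs (marginal k q (Kker G M) n x - mu x))); auto.
      intros; apply Rabs_pos.
    + apply marginal_cv_stationary; auto.
  - apply (cv_of_perturbed_recursion k G M (S N)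
      (fun n x => wmarginal k q (Kker G M) m n x / INR n ^ S N)
      (fun n y => INR (m y) * rsum k (fun x =>
         wmarginal k q (Kker G M) (decr m y) n x / INR n ^ N * (idm x y + G x y / INR n)))
      (limit_coef k mu Kt (S N) m) (fun y => INR (m y) * limit_coef k mu Kt N (decr m y) y));
      auto; try lia.
    + intros n HMn Hn1 y Hy. apply wmarginal_scaled_rec; auto.
    + intros y Hy. destruct (m y) eqn:Emy.
      * apply (Un_cv_ext (fun _ => 0)); [intros; simpl; ring|].
        replace (INR 0 * _) with 0 by (simpl; ring). apply cv_const.
      * rewrite <- Emy. apply cv_scal.
        rewrite <- (idm_mul_r k y (limit_coef k mu Kt N (decr m y)) Hy).
        apply cv_rsum. intros x' Hx'. apply CV_mult.
        -- apply IHN; auto. rewrite nsum_dec by (auto; lia). lia.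
        -- pose proof (CV_plus _ _ _ _ (cv_const (idm x' y)) (cv_scal (G x' y) _ _ cv_inv_n)) as Hc.
           rewrite Rmult_0_r, Rplus_0_r in Hc. eapply Un_cv_ext; [|exact Hc].
           intros; unfold Rdiv; auto.
    + intros z Hz. apply limit_coef_eq; auto. Qed.

Lemma Eocc_monomial_cv q m : stochastic_vec k q ->
  Un_cv (Eocc k q (Kker G M) (monomial k m)) (rsum k (limit_coef k mu Kt (nsum k m) m)).
Proof. intros Hq. set (N := nsum k m).
  set (a := fun n => rsum k (fun x => wmarginal k q (Kker G M) m n x) / INR n ^ N).
  assert (Ha : Un_cv a (rsum k (limit_coef k mu Kt N m))).
  { apply (Un_cv_ext (fun n => rsum k (fun x => wmarginal k q (Kker G M) m n x / INR n ^ N))).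
    - intros n. unfold a, Rdiv. rewrite rsum_scal_r. auto.
    - apply cv_rsum. intros x Hx. apply wmarginal_scaled_cv; auto. }
  assert (Hd : Un_cv (fun n => Eocc k q (Kker G M) (monomial k m) n - a n) 0).
  { apply (cv_0_squeeze _ (fun n => rsum k (fun i => INR (m i) ^ 2) * / INR n) 1).
    - intros n Hn. apply Eocc_monomial_approx; auto. apply Kker_stochastic.
    - replace 0 with (rsum k (fun i => INR (m i) ^ 2) * 0) by ring. apply cv_scal, cv_inv_n. }
  apply (Un_cv_ext (fun n => (Eocc k q (Kker G M) (monomial k m) n - a n) + a n)); [intros; ring|].
  replace (rsum k (limit_coef k mu Kt N m)) with (0 + rsum k (limit_coef k mu Kt N m)) by ring.
  apply CV_plus; auto. Qed.

Lemma nu_monomial_moment p0 (nu : (vec -> R) -> R) : stochastic_vec k p0 ->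
  (forall f, continuous_k k f -> Un_cv (Eocc k p0 (Kker G M) f) (nu f)) ->
  forall (m : nat -> nat) (N : nat), N = fold_right plus 0%nat (map m (seq 0 k)) -> (0 < N)%nat ->
  nu (monomial k m) = rprod k (fun i => INR (fact (m i))) / INR (fact N) *
    Pevent k mu Kt N (fun p => forallb (fun i => Nat.eqb (visits p i) (m i)) (seq 0 k)).
Proof. intros Hp0 Hnu m N HN HN0. rewrite nsum_fold in HN. subst N.
  rewrite (UL_sequence _ _ _ (Hnu _ (cont_monomial k m)) (Eocc_monomial_cv p0 m Hp0)).
  rewrite (rsum_ext _ _
      (fun z => fact_prod k m / INR (fact (nsum k m)) * last_count_prob k mu Kt (nsum k m) m z))
    by (intros; apply limit_coef_prob; auto).
  rewrite rsum_scal, last_count_prob_sum by (auto; apply Kt_stochastic || lia). reflexivity. Qed.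

Lemma Eocc_resolvent_cv p0 (nu : (vec -> R) -> R) : stochastic_vec k p0 ->
  (forall f, continuous_k k f -> Un_cv (Eocc k p0 (Kker G M) f) (nu f)) ->
  forall f, continuous_k k f -> Un_cv (Eocc k mu Kt f) (nu f).
Proof. intros Hp0 Hnu f Hf eps Heps.
  assert (UC := continuous_unif_cont k f Hf).
  destruct (unif_cont_cube_bounded k f UC) as [Bf [HBf0 HBf]].
  destruct (resolvent_kernel_close k G M Kt HG HK) as [C [HC0 HC]].
  (* Five errors of size eps/5: freezing the first a steps for Z and for T, the law of T_a
     against mu, the kernels K and K~ after time a, and the convergence of T. *)
  set (e := eps / 5). assert (He : 0 < e) by (unfold e; lra).
  destruct (UC e He) as [d [Hd HUC]].
  destruct (marginal_cv_stationary p0 Hp0 (e / (Bf + 1)) ltac:(apply Rdiv_lt_0_compat; lra))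
    as [A1 HA1].
  destruct (INR_archimed e (Bf * INR k * C) He) as [A2 HA2].
  set (a := max (max A1 (S A2)) 2).
  destruct (Hnu f Hf e He) as [N3 HN3].
  destruct (INR_archimed d (INR a) Hd) as [N4 HN4].
  exists (max (max N3 N4) (S a)). intros n Hn. specialize (HN3 n ltac:(lia)).
  set (b := (n - a)%nat). assert (Hnab : n = (a + b)%nat) by (unfold b, a in *; lia).
  assert (Hnd : INR a < INR (a + b) * d) by
      (rewrite <- Hnab; assert (INR N4 <= INR n) by (apply le_INR; lia); nra).
  set (hT := frozen_prefix_expect k (Kker G M) a b f). set (hZ := frozen_prefix_expect k Kt a b f).
  assert (F1 := Eocc_frozen_close k mu Kt f a b e d Kt_stochastic Hmu ltac:(lia) Hnd HUC).
  rewrite (rsum_ext _ _ (fun x => mu x * hZ x)) in F1 by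
      (intros; rewrite marginal_Kt_stationary; auto; lia).
  assert (F2 := Eocc_frozen_close k p0 (Kker G M) f a b e d Kker_stochastic Hp0 ltac:(lia) Hnd HUC).
  fold hT in F2.
  assert (F3 := mixture_diff_bound k (marginal k p0 (Kker G M) a) mu hT hZ Bf
    (Bf * (INR k * C / INR (a - 1))) Hmu
    (fun x Hx => frozen_prefix_expect_bound k (Kker G M) a b f Bf x Kker_stochastic
                   ltac:(lia) Hx HBf)
    (fun x Hx => frozen_prefix_expect_diff k (Kker G M) Kt a b f Bf C x Kker_stochastic
                   Kt_stochastic ltac:(lia) Hx HC0 HBf0 HC HBf)).
  assert (Hmix : rsum k (fun x => Rabs (marginal k p0 (Kker G M) a x - mu x)) * Bf <= e).
  { specialize (HA1 a ltac:(unfold a; lia)). unfold Rdist in HA1.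
    rewrite Rminus_0_r, Rabs_pos_eq in HA1 by (apply rsum_nonneg; intros; apply Rabs_pos).
    apply mul_le_of_lt_div; auto. apply rsum_nonneg; intros; apply Rabs_pos. }
  assert (Htail : Bf * (INR k * C / INR (a - 1)) < e).
  { replace (Bf * (INR k * C / INR (a - 1))) with (Bf * INR k * C / INR (a - 1))
      by (unfold Rdiv; ring).
    apply (div_lt_of_archimed _ _ A2); auto; unfold a; lia. }
  rewrite <- Hnab in F1, F2. unfold Rdist in *.
  pose proof (Rabs_chain4 (Eocc k mu Kt f n) (rsum k (fun x => mu x * hZ x))
    (rsum k (fun x => marginal k p0 (Kker G M) a x * hT x)) (Eocc k p0 (Kker G M) f n) (nu f))
    as Hchain.
  rewrite (Rabs_minus_sym (rsum k (fun x => mu x * hZ x))),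
      (Rabs_minus_sym _ (Eocc k p0 (Kker G M) f n)) in Hchain.
  unfold e in *. lra. Qed.

End ResolventChain.

Theorem mainTheorem8
  (k : nat) (G : mat) (mu : vec) (M : nat) (Kt : nat -> mat)
  (p0 : vec) (nu : (vec -> R) -> R)
  (HG : is_generator k G)
  (HGnz : forall i j, (i < k)%nat -> (j < k)%nat -> G i j <> 0)
  (Hmu : stochastic_vec k mu)
  (HmuG : forall j, (j < k)%nat -> rsum k (fun i => mu i * G i j) = 0)
  (HM : forall n, (M < n)%nat -> forall i j, (i < k)%nat -> (j < k)%nat ->
          0 <= idm i j + G i j / INR n)
  (HKt : forall n, (1 <= n)%nat -> forall i j, (i < k)%nat -> (j < k)%nat ->
          mmul k (fun a b => idm a b - G a b / INR n) (Kt n) i j = idm i j /\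
          mmul k (Kt n) (fun a b => idm a b - G a b / INR n) i j = idm i j)
  (Hp0 : stochastic_vec k p0)
  (Hnu : forall f, continuous_k k f ->
          Un_cv (Eocc k p0 (Kker G M) f) (nu f)) :
  (exists C, forall n, (1 <= n)%nat -> forall i j, (i < k)%nat -> (j < k)%nat ->
      Rabs (Kt n i j - Kker G M n i j) <= C / (INR n ^ 2)) /\
  (forall f, continuous_k k f -> Un_cv (Eocc k mu Kt f) (nu f)) /\
  (forall (m : nat -> nat) (N : nat),
      N = fold_right plus 0%nat (map m (seq 0 k)) -> (0 < N)%nat ->
      nu (monomial k m) =
        rprod k (fun i => INR (fact (m i))) / INR (fact N) *
        Pevent k mu Kt N
          (fun p => forallb (fun i => Nat.eqb (visits p i) (m i)) (seq 0 k))) /\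
  (forall (i N : nat), (i < k)%nat -> (0 < N)%nat ->
      nu (fun x => x i ^ N) =
        Pevent k mu Kt N (fun p => forallb (fun x => Nat.eqb x i) p)).
Proof.
  assert (HK : forall n, (1 <= n)%nat -> is_resolvent k G n (Kt n)) by exact HKt.
  assert (Hmom := nu_monomial_moment k G mu M Kt HG HGnz Hmu HmuG HM HK p0 nu Hp0 Hnu).
  split; [|split; [|split]].
  - destruct (resolvent_kernel_close k G M Kt HG HK) as [C [_ HC]]. exists C. exact HC.
  - exact (Eocc_resolvent_cv k G mu M Kt HG HGnz Hmu HmuG HM HK p0 nu Hp0 Hnu).
  - exact Hmom.
  - exact (nu_pure_power k mu Kt nu Hmom).
Qed.
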